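(* Let $f\colon\mathbb R\times\mathbb R\times\mathbb Z^3\to\mathbb C$, $a\in\mathbb Z^3$, $T\ge1$, let $J\subseteq[0,T]$ be an interval, and let $A,N\ge1$ with $|a|\lesssim A\ll N$. Assume that for all $|t|,|t'|\le T$ and $n\in\mathbb Z^3$: $|f(t,t',n)|\le A\langle n\rangle^{-3}$, $|f(t,t',n)-f(t,t',-n)|\le A\langle n\rangle^{-4}$, and $|\partial_{t'}f(t,t',n)|\le A\langle n\rangle^{-4}$. Then $$\sup_{\lambda\in\mathbb R}\sup_{|t|\le T}\Big|\sum_{n\in\mathbb Z^3}\chi_N(n)\int_0^t1_J(t')\sin((t-t')\langle a+n\rangle)\cos((t-t')\langle n\rangle)e^{i\lambda t'}f(t,t',n)\,dt'\Big|\lesssim T^2A^3\log(2+N)N^{-1}.$$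
   Context: $\langle n\rangle=(1+|n|^2)^{1/2}$. $N$ is dyadic and $\chi_N\colon\mathbb Z^3\to[0,1]$ is the Littlewood–Paley symbol ($\chi_1=\rho_1$, $\chi_N=\rho_N-\rho_{N/2}$ for a fixed smooth radial-type truncation $\rho_N$ to $|n|\lesssim N$), supported on $|n|\sim N$. ''$|a|\lesssim A\ll N$'' means $|a|\le CA$ for an absolute constant $C$ and $N\ge C'A$ for a sufficiently large absolute constant $C'$. Implicit constants are absolute. *)

From Stdlib Require Import Reals ZArith List ClassicalEpsilon.
From Coquelicot Require Import Coquelicot.
Open Scope R_scope.

Definition Z3 : Type := (Z * Z * Z)%type.

Definition Z3add (a n : Z3) : Z3 :=
  match a, n with (a1, a2, a3), (n1, n2, n3) => ((a1 + n1)%Z, (a2 + n2)%Z, (a3 + n3)%Z) end.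

Definition Z3opp (n : Z3) : Z3 :=
  match n with (n1, n2, n3) => ((- n1)%Z, (- n2)%Z, (- n3)%Z) end.

Definition Z3norm (n : Z3) : R :=
  match n with (n1, n2, n3) => sqrt (IZR n1 ^ 2 + IZR n2 ^ 2 + IZR n3 ^ 2) end.

Definition jbr (n : Z3) : R := sqrt (1 + Z3norm n ^ 2).

Definition truncation_profile (rho0 : R -> R) : Prop :=
  (forall k x, ex_derive (Derive_n rho0 k) x) /\
  (forall x, 0 <= rho0 x <= 1) /\
  (forall x, Rabs x <= 1 -> rho0 x = 1) /\
  (forall x, 2 <= Rabs x -> rho0 x = 0).

Definition rhoN (rho0 : R -> R) (N : R) (n : Z3) : R := rho0 (Z3norm n / N).

Definition chiN (rho0 : R -> R) (N : R) (n : Z3) : R :=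
  if Req_EM_T N 1 then rhoN rho0 1 n else rhoN rho0 N n - rhoN rho0 (N / 2) n.

Definition is_dyadic (N : R) : Prop := exists k : nat, N = 2 ^ k.

Definition is_interval (J : R -> Prop) : Prop :=
  forall x y z, J x -> J z -> x <= y <= z -> J y.

Definition indicator (J : R -> Prop) (x : R) : R :=
  if excluded_middle_informative (J x) then 1 else 0.

Definition cexpi (th : R) : C := (cos th, sin th).

Definition zrange (K : nat) : list Z :=
  map (fun i => (Z.of_nat i - Z.of_nat K)%Z) (seq 0 (2 * K + 1)).

Definition sumZ (K : nat) (g : Z -> C) : C :=
  fold_right Cplus 0%C (map g (zrange K)).

Definition sum_box (K : nat) (g : Z3 -> C) : C :=
  sumZ K (fun n1 => sumZ K (fun n2 => sumZ K (fun n3 => g (n1, n2, n3)))).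

Definition integrand (f : R -> R -> Z3 -> C) (a : Z3) (J : R -> Prop)
  (lam t : R) (n : Z3) (t' : R) : C :=
  Cmult (RtoC (indicator J t' * sin ((t - t') * jbr (Z3add a n))
                  * cos ((t - t') * jbr n)))
        (Cmult (cexpi (lam * t')) (f t t' n)).

(* sum_n chi_N(n) int_0^t integrand dt' , the n-sum being over a box
   containing the support of chi_N *)
Definition main_term (rho0 : R -> R) (N : R) (K : nat)
  (f : R -> R -> Z3 -> C) (a : Z3) (J : R -> Prop) (lam t : R) : C :=
  sum_box K (fun n => Cmult (RtoC (chiN rho0 N n))
     (RInt (V := C_R_CompleteNormedModule) (integrand f a J lam t n) 0 t)).

(* Write [sin p cos q = (sin (p + q) + sin (p - q)) / 2] with [p = (t - t') <a + n>] and
   [q = (t - t') <n>].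

   The sum frequency [w(n) = <a + n> + <n>] makes the [t'] integral oscillate like
   [e^{i (lam +- w(n)) t'}]; comparing it with its shift by half a period gains a factor
   [min (1, 1 / |lam +- w(n)|)] against the size [A N^-3] of [f] and [A N^-4] of its derivative
   on the shell [|n| ~ N]. Because [|a| <= N / 4], [w] grows by at least [1/4] per unit step
   along the dominant coordinate of [n], so on each line of the shell these gains sum to
   [O(log N)]; over the [O(N^2)] lines this gives [T A log N / N].

   The difference frequency does not oscillate, but the terms [n] and [-n] nearly cancel:
   [f(n) - f(-n) = O(A <n>^-4)], and [sin (x d+) + sin (x d-) = O(|x| |d+ + d-|)] where
   [d+ + d- = <a + n> + <a - n> - 2 <n> = O(|a|^2 / <n>)] by the parallelogram law. The
   [O(N^3)] shell terms of size [T A (1 + T |a|^2) N^-4] then sum to [T^2 A^3 / N]. *)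

From Stdlib Require Import Reals ZArith List Permutation Lra Lia Psatz Classical ClassicalEpsilon.
From Coquelicot Require Import Coquelicot.
Open Scope R_scope.

Notation CV := C_R_CompleteNormedModule.

Definition lsum {X : Type} (l : list X) (g : X -> R) : R := fold_right Rplus 0 (map g l).

Definition lcsum {X : Type} (l : list X) (g : X -> C) : C := fold_right Cplus 0%C (map g l).

Section ListSums.
Context {X : Type}.
Implicit Types (l : list X) (g h : X -> R).

Lemma lsum_nil g : lsum nil g = 0.
Proof. reflexivity. Qed.

Lemma lsum_cons x l g : lsum (x :: l) g = g x + lsum l g.
Proof. reflexivity. Qed.

Lemma lsum_app l1 l2 g : lsum (l1 ++ l2) g = lsum l1 g + lsum l2 g.
Proof.
  induction l1 as [|x l1 IH]; [simpl; rewrite lsum_nil; ring|].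
  simpl app. rewrite !lsum_cons, IH. ring.
Qed.

Lemma lsum_ext l g h : (forall x, In x l -> g x = h x) -> lsum l g = lsum l h.
Proof.
  induction l as [|x l IH]; intros H; [reflexivity|].
  rewrite !lsum_cons, H by (simpl; auto). f_equal. apply IH. intros y Hy. apply H. simpl; auto.
Qed.

Lemma lsum_le l g h : (forall x, In x l -> g x <= h x) -> lsum l g <= lsum l h.
Proof.
  induction l as [|x l IH]; intros H; [apply Rle_refl|].
  rewrite !lsum_cons. apply Rplus_le_compat; [apply H; simpl; auto|].
  apply IH. intros y Hy. apply H. simpl; auto.
Qed.

Lemma lsum_const l c : lsum l (fun _ => c) = INR (length l) * c.
Proof.
  induction l as [|x l IH]; [rewrite !lsum_nil; simpl; ring|].
  rewrite lsum_cons, IH. simpl length. rewrite S_INR. ring.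
Qed.

Lemma lsum_eq0 l g : (forall x, In x l -> g x = 0) -> lsum l g = 0.
Proof. intros H. rewrite (lsum_ext l g (fun _ => 0)) by exact H. rewrite lsum_const. ring. Qed.

Lemma lsum_plus l g h : lsum l (fun x => g x + h x) = lsum l g + lsum l h.
Proof. induction l as [|x l IH]; [rewrite !lsum_nil; simpl; ring|]. rewrite !lsum_cons, IH. ring. Qed.

Lemma lsum_scal l c g : lsum l (fun x => c * g x) = c * lsum l g.
Proof. induction l as [|x l IH]; [rewrite !lsum_nil; simpl; ring|]. rewrite !lsum_cons, IH. ring. Qed.

Lemma lsum_perm l l' g : Permutation l l' -> lsum l g = lsum l' g.
Proof.
  induction 1; rewrite ?lsum_cons; try congruence; ring.
Qed.

Lemma lcsum_ext l (g h : X -> C) : (forall x, In x l -> g x = h x) -> lcsum l g = lcsum l h.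
Proof.
  induction l as [|x l IH]; intros H; [reflexivity|].
  unfold lcsum in *; simpl. rewrite H by (simpl; auto). f_equal. apply IH.
  intros y Hy. apply H. simpl; auto.
Qed.

Lemma lcsum_plus l (g h : X -> C) : lcsum l (fun x => g x + h x)%C = (lcsum l g + lcsum l h)%C.
Proof. induction l as [|x l IH]; unfold lcsum in *; simpl; [ring|]. rewrite IH. ring. Qed.

Lemma lcsum_scal l c (g : X -> C) : lcsum l (fun x => c * g x)%C = (c * lcsum l g)%C.
Proof. induction l as [|x l IH]; unfold lcsum in *; simpl; [ring|]. rewrite IH. ring. Qed.

Lemma lcsum_perm l l' (g : X -> C) : Permutation l l' -> lcsum l g = lcsum l' g.
Proof. unfold lcsum. induction 1; simpl; try congruence; ring. Qed.

Lemma Cmod_lcsum l (g : X -> C) : Cmod (lcsum l g) <= lsum l (fun x => Cmod (g x)).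
Proof.
  induction l as [|x l IH]; unfold lcsum, lsum in *; simpl; [rewrite Cmod_0; lra|].
  eapply Rle_trans; [apply Cmod_triangle | lra].
Qed.

End ListSums.

Lemma lsum_swap {X Y : Type} (l : list X) (l' : list Y) (g : X -> Y -> R) :
  lsum l (fun x => lsum l' (g x)) = lsum l' (fun y => lsum l (fun x => g x y)).
Proof.
  induction l as [|x l IH].
  - rewrite lsum_nil. symmetry. apply lsum_eq0. reflexivity.
  - rewrite lsum_cons, IH, <- lsum_plus. reflexivity.
Qed.

Lemma lsum_map {X Y : Type} (f : X -> Y) (l : list X) (g : Y -> R) :
  lsum (map f l) g = lsum l (fun x => g (f x)).
Proof. unfold lsum. now rewrite map_map. Qed.

Lemma lcsum_map {X Y : Type} (f : X -> Y) (l : list X) (g : Y -> C) :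
  lcsum (map f l) g = lcsum l (fun x => g (f x)).
Proof. unfold lcsum. now rewrite map_map. Qed.

Fixpoint zseg (p : Z) (n : nat) : list Z :=
  match n with O => nil | S k => p :: zseg (p + 1)%Z k end.

Lemma zseg_app p m n : zseg p (m + n) = zseg p m ++ zseg (p + Z.of_nat m)%Z n.
Proof.
  revert p; induction m as [|m IH]; intros p; simpl.
  - f_equal. lia.
  - rewrite IH. do 3 f_equal. lia.
Qed.

Lemma In_zseg p n x : In x (zseg p n) <-> (p <= x < p + Z.of_nat n)%Z.
Proof. revert p; induction n as [|n IH]; intros p; simpl; [lia|]. rewrite IH. lia. Qed.

Lemma length_zseg p n : length (zseg p n) = n.
Proof. revert p; induction n; simpl; auto. Qed.

Lemma lsum_zseg_S p n g : lsum (zseg p (S n)) g = lsum (zseg p n) g + g (p + Z.of_nat n)%Z.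
Proof.
  rewrite <- Nat.add_1_r, zseg_app, lsum_app. simpl. rewrite lsum_cons, lsum_nil. ring.
Qed.

Lemma rev_zseg p n : rev (zseg p n) = map Z.opp (zseg (- (p + Z.of_nat n) + 1) n).
Proof.
  revert p; induction n as [|n IH]; intros p; [reflexivity|].
  change (rev (zseg p (S n))) with (rev (zseg (p + 1) n) ++ p :: nil).
  rewrite IH, <- Nat.add_1_r, zseg_app, map_app. simpl.
  f_equal; [do 2 f_equal | f_equal]; lia.
Qed.

Lemma zrange_zseg K : zrange K = zseg (- Z.of_nat K) (2 * K + 1).
Proof.
  unfold zrange. generalize (2 * K + 1)%nat as n. intros n.
  replace (- Z.of_nat K)%Z with (Z.of_nat 0 - Z.of_nat K)%Z by lia.
  generalize 0%nat as s. induction n as [|n IH]; intros s; [reflexivity|].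
  simpl. rewrite IH. do 2 f_equal. lia.
Qed.

Lemma In_zrange K x : In x (zrange K) <-> (Z.abs x <= Z.of_nat K)%Z.
Proof. rewrite zrange_zseg, In_zseg. lia. Qed.

Lemma lsum_zrange_opp K g : lsum (zrange K) g = lsum (zrange K) (fun x => g (- x)%Z).
Proof.
  rewrite <- (lsum_map Z.opp). apply lsum_perm.
  replace (map Z.opp (zrange K)) with (rev (zrange K)) by
    (rewrite zrange_zseg, rev_zseg; do 2 f_equal; lia).
  apply Permutation_rev.
Qed.

Lemma lcsum_zrange_opp K g : lcsum (zrange K) g = lcsum (zrange K) (fun x => g (- x)%Z).
Proof.
  rewrite <- (lcsum_map Z.opp). apply lcsum_perm.
  replace (map Z.opp (zrange K)) with (rev (zrange K)) by
    (rewrite zrange_zseg, rev_zseg; do 2 f_equal; lia).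
  apply Permutation_rev.
Qed.

Lemma lsum_zrange_shrink (K M : nat) g : (M <= K)%nat ->
  (forall x, (Z.of_nat M < Z.abs x)%Z -> g x = 0) -> lsum (zrange K) g = lsum (zrange M) g.
Proof.
  intros HMK H. rewrite !zrange_zseg.
  replace (2 * K + 1)%nat with ((K - M) + ((2 * M + 1) + (K - M)))%nat by lia.
  rewrite !zseg_app, !lsum_app.
  replace (- Z.of_nat K + Z.of_nat (K - M))%Z with (- Z.of_nat M)%Z by lia.
  rewrite (lsum_eq0 (zseg (- Z.of_nat K) _)), (lsum_eq0 (zseg _ (K - M))); [ring| |];
    intros x Hx; apply H; rewrite In_zseg in Hx; lia.
Qed.

Lemma lsum_zrange_le (K M : nat) g B : (M <= K)%nat ->
  (forall x, (Z.of_nat M < Z.abs x)%Z -> g x = 0) -> (forall x, g x <= B) ->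
  lsum (zrange K) g <= INR (2 * M + 1) * B.
Proof.
  intros HMK H HB. rewrite (lsum_zrange_shrink K M) by assumption.
  rewrite <- (length_zseg (- Z.of_nat M) (2 * M + 1)), <- lsum_const, <- zrange_zseg.
  apply lsum_le. auto.
Qed.

Definition lsum3 (K : nat) (g : Z3 -> R) : R :=
  lsum (zrange K) (fun x => lsum (zrange K) (fun y => lsum (zrange K) (fun z => g (x, y, z)))).

Lemma lsum3_le K g h : (forall n, g n <= h n) -> lsum3 K g <= lsum3 K h.
Proof. intros H. unfold lsum3. do 3 (apply lsum_le; intros ? _). apply H. Qed.

Lemma lsum3_scal K c g : lsum3 K (fun n => c * g n) = c * lsum3 K g.
Proof.
  unfold lsum3. rewrite <- lsum_scal. apply lsum_ext; intros x _.
  rewrite <- lsum_scal. apply lsum_ext; intros y _. apply lsum_scal.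
Qed.

Lemma lsum3_le_box (K M : nat) (G : Z -> Z -> Z -> R) B : (M <= K)%nat -> 0 <= B ->
  (forall x y, lsum (zrange K) (G x y) <= B) ->
  (forall x y z, (Z.of_nat M < Z.abs x)%Z \/ (Z.of_nat M < Z.abs y)%Z -> G x y z = 0) ->
  lsum (zrange K) (fun x => lsum (zrange K) (fun y => lsum (zrange K) (G x y)))
    <= INR (2 * M + 1) * (INR (2 * M + 1) * B).
Proof.
  intros HMK HB Hinner Hout. apply lsum_zrange_le; auto.
  - intros x Hx. apply lsum_eq0. intros y _. apply lsum_eq0. intros z _. apply Hout. auto.
  - intros x. apply lsum_zrange_le; auto.
    intros y Hy. apply lsum_eq0. intros z _. apply Hout. auto.
Qed.

Lemma sum_box_lcsum K g : sum_box K g =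
  lcsum (zrange K) (fun x => lcsum (zrange K) (fun y => lcsum (zrange K) (fun z => g (x, y, z)))).
Proof. reflexivity. Qed.

Lemma sum_box_ext K g h : (forall n, g n = h n) -> sum_box K g = sum_box K h.
Proof. intros H. rewrite !sum_box_lcsum. do 3 (apply lcsum_ext; intros ? _). apply H. Qed.

Lemma sum_box_plus K g h :
  sum_box K (fun n => g n + h n)%C = (sum_box K g + sum_box K h)%C.
Proof.
  rewrite !sum_box_lcsum.
  rewrite <- lcsum_plus. apply lcsum_ext; intros x _.
  rewrite <- lcsum_plus. apply lcsum_ext; intros y _. apply lcsum_plus.
Qed.

Lemma sum_box_scal K c g : sum_box K (fun n => c * g n)%C = (c * sum_box K g)%C.
Proof.
  rewrite !sum_box_lcsum.
  rewrite <- lcsum_scal. apply lcsum_ext; intros x _.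
  rewrite <- lcsum_scal. apply lcsum_ext; intros y _. apply lcsum_scal.
Qed.

Lemma sum_box_opp K g : sum_box K g = sum_box K (fun n => g (Z3opp n)).
Proof.
  rewrite !sum_box_lcsum.
  rewrite lcsum_zrange_opp. apply lcsum_ext; intros x _.
  rewrite lcsum_zrange_opp. apply lcsum_ext; intros y _.
  rewrite lcsum_zrange_opp. reflexivity.
Qed.

Lemma Cmod_sum_box K g : Cmod (sum_box K g) <= lsum3 K (fun n => Cmod (g n)).
Proof.
  rewrite sum_box_lcsum. unfold lsum3.
  eapply Rle_trans; [apply Cmod_lcsum | apply lsum_le; intros x _].
  eapply Rle_trans; [apply Cmod_lcsum | apply lsum_le; intros y _].
  apply Cmod_lcsum.
Qed.

(** * Sums of [min (1, 1 / |lam - v m|)] over separated values *)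

Definition iverson (P : Prop) : R := if excluded_middle_informative P then 1 else 0.

Lemma iverson_true (P : Prop) : P -> iverson P = 1.
Proof. intros H. unfold iverson. destruct excluded_middle_informative; tauto. Qed.

Lemma iverson_false (P : Prop) : ~ P -> iverson P = 0.
Proof. intros H. unfold iverson. destruct excluded_middle_informative; tauto. Qed.

Lemma iverson_bounds (P : Prop) : 0 <= iverson P <= 1.
Proof. unfold iverson. destruct excluded_middle_informative; lra. Qed.

Lemma iverson_split (P Q : Prop) : iverson P = iverson (P /\ Q) + iverson (P /\ ~ Q).
Proof.
  unfold iverson.
  destruct (excluded_middle_informative P), (excluded_middle_informative (P /\ Q)),
    (excluded_middle_informative (P /\ ~ Q)); try ring; exfalso; tauto.
Qed.

Section DistanceSums.
Variable phi : Z -> R.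
Hypothesis phi_nonneg : forall k, 0 <= phi k.
Hypothesis phi_antimono : forall k l, (0 <= k <= l)%Z -> phi l <= phi k.

Let phi_from (y m : Z) : R := if Z_le_dec y m then phi (m - y) else 0.

Lemma lsum_phi_from_shift n : forall p q y, (0 <= q <= p - y)%Z ->
  lsum (zseg p n) (phi_from y) <= lsum (zseg q n) phi.
Proof.
  induction n as [|n IH]; intros p q y Hq; simpl zseg; [apply Rle_refl|].
  rewrite !lsum_cons. apply Rplus_le_compat; [|apply IH; lia].
  unfold phi_from. destruct Z_le_dec; [apply phi_antimono | exfalso]; lia.
Qed.

Lemma lsum_phi_from_le n : forall p y, lsum (zseg p n) (phi_from y) <= lsum (zseg 0 n) phi.
Proof.
  induction n as [|n IH]; intros p y; [apply Rle_refl|].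
  destruct (Z_le_dec y p). { apply lsum_phi_from_shift. lia. }
  simpl zseg at 1. rewrite lsum_cons, lsum_zseg_S.
  unfold phi_from at 1. destruct Z_le_dec; [lia|].
  specialize (IH (p + 1)%Z y). specialize (phi_nonneg (0 + Z.of_nat n)). lra.
Qed.

Lemma lsum_phi_dist_le (M : nat) (x : Z) :
  lsum (zrange M) (fun m => phi (Z.abs (m - x))) <= 2 * lsum (zseg 0 (2 * M + 1)) phi.
Proof.
  apply Rle_trans with (lsum (zrange M) (fun m => phi_from x m + phi_from (- x) (- m))).
  { apply lsum_le. intros m _. unfold phi_from.
    pose proof (phi_nonneg (m - x)); pose proof (phi_nonneg (- m - - x)).
    destruct (Z_le_dec x m), (Z_le_dec (- x) (- m)); try lia.
    - rewrite Z.abs_eq by lia. lra.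
    - rewrite Z.abs_eq by lia. lra.
    - rewrite Z.abs_neq by lia. replace (- (m - x))%Z with (- m - - x)%Z by lia. lra. }
  rewrite lsum_plus, (lsum_zrange_opp M (fun m => phi_from (- x) (- m))).
  rewrite (lsum_ext _ (fun m => phi_from (- x) (- - m)) (phi_from (- x))) by (intros; f_equal; lia).
  rewrite zrange_zseg.
  pose proof (lsum_phi_from_le (2 * M + 1) (- Z.of_nat M) x).
  pose proof (lsum_phi_from_le (2 * M + 1) (- Z.of_nat M) (- x)). lra.
Qed.

End DistanceSums.

Lemma one_sub_inv_le_ln y : 0 < y -> 1 - / y <= ln y.
Proof.
  intros Hy. pose proof (exp_ineq1_le (ln (/ y))) as H.
  rewrite exp_ln, ln_Rinv in H by (try apply Rinv_0_lt_compat; lra). lra.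
Qed.

Lemma harmonic_le_ln n : lsum (zseg 1 (S n)) (fun k => / IZR k) <= 1 + ln (INR (S n)).
Proof.
  induction n as [|n IH].
  { simpl. rewrite lsum_cons, lsum_nil, ln_1, Rinv_1. lra. }
  rewrite lsum_zseg_S. replace (1 + Z.of_nat (S n))%Z with (Z.of_nat (S (S n))) by lia.
  rewrite <- INR_IZR_INZ.
  enough (/ INR (S (S n)) <= ln (INR (S (S n))) - ln (INR (S n))) by lra.
  rewrite <- ln_div by (apply lt_0_INR; lia).
  replace (/ INR (S (S n))) with (1 - / (INR (S (S n)) / INR (S n)))
    by (rewrite !S_INR; pose proof (pos_INR n); field; lra).
  apply one_sub_inv_le_ln. apply Rdiv_lt_0_compat; apply lt_0_INR; lia.
Qed.

Definition harm_weight (k : Z) : R := / IZR (Z.max k 1).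

Lemma harm_weight_pos k : 0 < harm_weight k.
Proof. apply Rinv_0_lt_compat, IZR_lt. lia. Qed.

Lemma harm_weight_antimono k l : (0 <= k <= l)%Z -> harm_weight l <= harm_weight k.
Proof. intros H. apply Rinv_le_contravar; [apply IZR_lt | apply IZR_le]; lia. Qed.

Lemma lsum_harm_weight_le n : lsum (zseg 0 (S n)) harm_weight <= 2 + ln (INR (S n)).
Proof.
  simpl zseg. rewrite lsum_cons.
  replace (harm_weight 0) with 1 by (unfold harm_weight; simpl; symmetry; apply Rinv_1).
  destruct n as [|n]. { simpl. rewrite lsum_nil, ln_1. lra. }
  rewrite (lsum_ext _ _ (fun k => / IZR k))
    by (intros k Hk; apply In_zseg in Hk; unfold harm_weight; now rewrite Z.max_l by lia).
  pose proof (harmonic_le_ln n).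
  assert (ln (INR (S n)) <= ln (INR (S (S n)))) by (apply ln_le; [apply lt_0_INR | apply le_INR]; lia).
  lra.
Qed.

Definition mininv (x : R) : R := if Rle_dec (Rabs x) 1 then 1 else / Rabs x.

Lemma mininv_le_1 x : mininv x <= 1.
Proof.
  unfold mininv. destruct Rle_dec; [lra|].
  rewrite <- Rinv_1. apply Rinv_le_contravar; lra.
Qed.

Lemma mininv_nonneg x : 0 <= mininv x.
Proof. unfold mininv. destruct Rle_dec; [lra|]. left. apply Rinv_0_lt_compat. lra. Qed.

Lemma mininv_le_inv x y : 0 < y -> y <= Rabs x -> mininv x <= / y.
Proof.
  intros Hy Hyx. unfold mininv. destruct Rle_dec; [|apply Rinv_le_contravar; lra].
  rewrite <- Rinv_1 at 1. apply Rinv_le_contravar; lra.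
Qed.

Lemma mininv_opp x : mininv (- x) = mininv x.
Proof. unfold mininv. now rewrite Rabs_Ropp. Qed.

Lemma exists_min_in_list (l : list Z) (P : Z -> Prop) (g : Z -> R) :
  (exists y, In y l /\ P y) ->
  exists x, In x l /\ P x /\ forall y, In y l -> P y -> g x <= g y.
Proof.
  induction l as [|a l IH]; intros [y [Hy Py]]; [destruct Hy|].
  destruct (classic (exists y, In y l /\ P y)) as [Hl|Hl].
  - destruct (IH Hl) as [x [Hx [Px Hmin]]].
    destruct (classic (P a /\ g a <= g x)) as [[Pa Ha]|Ha].
    + exists a. split; [now left|]. split; [exact Pa|].
      intros z [<-|Hz] Pz; [lra|]. specialize (Hmin z Hz Pz). lra.
    + exists x. split; [now right|]. split; [exact Px|].
      intros z [<-|Hz] Pz; [|now apply Hmin]. apply Rnot_lt_le. intros Hlt. apply Ha. split; [exact Pz | lra].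
  - destruct Hy as [<-|Hy]; [|exfalso; eauto].
    exists a. split; [now left|]. split; [exact Py|].
    intros z [<-|Hz] Pz; [lra | exfalso; eauto].
Qed.

(* The sum is compared termwise with [8 * harm_weight |m - x|], [x] being the
   point of [P] where [v] comes closest to [lam]. *)
Lemma separated_lsum_mininv_le (K M : nat) (P : Z -> Prop) (v : Z -> R) (lam : R) :
  (M <= K)%nat -> (forall m, P m -> (Z.abs m <= Z.of_nat M)%Z) ->
  (forall m m', P m -> P m' -> IZR (Z.abs (m - m')) / 4 <= Rabs (v m - v m')) ->
  lsum (zrange K) (fun m => iverson (P m) * mininv (lam - v m)) <= 16 * (2 + ln (INR (2 * M + 1))).
Proof.
  intros HMK HS Hsep.
  assert (Hln : 0 <= ln (INR (2 * M + 1))) by (rewrite <- ln_1; apply ln_le; [lra|]; apply (le_INR 1); lia).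
  destruct (classic (exists y, In y (zrange K) /\ P y)) as [Hne|Hempty].
  2: { rewrite lsum_eq0; [lra|]. intros m Hm. rewrite iverson_false; [ring|]. eauto. }
  destruct (exists_min_in_list _ P (fun m => Rabs (lam - v m)) Hne) as [x [_ [Px Hmin]]].
  set (g := fun m => if Z_le_dec (Z.abs m) (Z.of_nat M) then 8 * harm_weight (Z.abs (m - x)) else 0).
  apply Rle_trans with (lsum (zrange K) g).
  { apply lsum_le. intros m Hm. unfold g.
    destruct (classic (P m)) as [Pm|Pm].
    2: { rewrite iverson_false by exact Pm.
         destruct Z_le_dec; [pose proof (harm_weight_pos (Z.abs (m - x)))|]; lra. }
    rewrite iverson_true, Rmult_1_l by exact Pm. destruct Z_le_dec; [|specialize (HS m Pm); lia].
    assert (Hd : IZR (Z.abs (m - x)) / 8 <= Rabs (lam - v m)).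
    { pose proof (Hsep m x Pm Px). specialize (Hmin m Hm Pm).
      pose proof (Rabs_triang (- (lam - v m)) (lam - v x)). rewrite Rabs_Ropp in *.
      replace (- (lam - v m) + (lam - v x)) with (v m - v x) in * by ring. lra. }
    unfold harm_weight. destruct (Z.eq_dec (Z.abs (m - x)) 0) as [E|E].
    - rewrite E. change (Z.max 0 1) with 1%Z. rewrite Rinv_1. pose proof (mininv_le_1 (lam - v m)). lra.
    - rewrite Z.max_l by lia. assert (1 <= IZR (Z.abs (m - x))) by (apply IZR_le; lia).
      apply Rle_trans with (/ (IZR (Z.abs (m - x)) / 8)); [apply mininv_le_inv; lra|].
      right. field. lra. }
  rewrite (lsum_zrange_shrink K M g HMK) by (intros y Hy; unfold g; destruct Z_le_dec; [lia | reflexivity]).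
  rewrite (lsum_ext _ g (fun m => 8 * harm_weight (Z.abs (m - x))))
    by (intros y Hy; apply In_zrange in Hy; unfold g; destruct Z_le_dec; [reflexivity | lia]).
  rewrite lsum_scal.
  pose proof (lsum_phi_dist_le harm_weight (fun k => Rlt_le _ _ (harm_weight_pos k))
    harm_weight_antimono M x).
  replace (2 * M + 1)%nat with (S (2 * M))%nat in * by lia.
  pose proof (lsum_harm_weight_le (2 * M)). lra.
Qed.

(* With [n = (x, y, m)] and [a = (a1, a2, b)], [pair_freq (x^2 + y^2) ((a1 + x)^2 + (a2 + y)^2) b m]
   is [<a + n> + <n>], seen as a function of the last coordinate [m]. *)
Definition pair_freq (q qa b m : R) : R := sqrt (1 + qa + (b + m) ^ 2) + sqrt (1 + q + m ^ 2).

Lemma pair_freq_opp q qa b m : pair_freq q qa b m = pair_freq q qa (- b) (- m).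
Proof. unfold pair_freq. f_equal; f_equal; ring. Qed.

(* The first root does not decrease; the second grows by [(2 m + 1) / (sqrt X + sqrt Y) >= 1/4],
   since [q <= 2 m^2] keeps both roots below [2 (m + 1)]. *)
Lemma pair_freq_step q qa b m : 0 <= q <= 2 * m ^ 2 -> 0 <= qa -> Rabs b <= m ->
  pair_freq q qa b m + 1 / 4 <= pair_freq q qa b (m + 1).
Proof.
  intros Hq Hqa Hb. unfold pair_freq.
  assert (Hm : 0 <= m) by (pose proof (Rabs_pos b); lra).
  assert (sqrt (1 + qa + (b + m) ^ 2) <= sqrt (1 + qa + (b + (m + 1)) ^ 2)).
  { apply sqrt_le_1_alt. pose proof (Rle_abs (- b)). rewrite Rabs_Ropp in *. nra. }
  set (X := 1 + q + (m + 1) ^ 2). set (Y := 1 + q + m ^ 2).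
  assert (HX : 0 <= X) by (unfold X; nra). assert (HY : 0 <= Y) by (unfold Y; nra).
  pose proof (sqrt_sqrt X HX). pose proof (sqrt_sqrt Y HY). pose proof (sqrt_pos X). pose proof (sqrt_pos Y).
  assert (sqrt X <= 2 * (m + 1)).
  { rewrite <- (sqrt_square (2 * (m + 1))) by lra. apply sqrt_le_1_alt. unfold X. nra. }
  assert (sqrt Y <= sqrt X) by (apply sqrt_le_1_alt; unfold X, Y; nra).
  assert ((sqrt X - sqrt Y) * (sqrt X + sqrt Y) = 2 * m + 1) by (unfold X, Y in *; nra).
  assert (sqrt X - sqrt Y >= 1 / 4) by nra.
  lra.
Qed.

Lemma pair_freq_gap_nat q qa b (d : nat) : forall m, 0 <= q <= 2 * m ^ 2 -> 0 <= qa -> Rabs b <= m ->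
  pair_freq q qa b m + INR d / 4 <= pair_freq q qa b (m + INR d).
Proof.
  induction d as [|d IH]; intros m Hq Hqa Hb.
  { simpl. rewrite Rplus_0_r. lra. }
  assert (Hm : 0 <= m) by (pose proof (Rabs_pos b); lra).
  pose proof (pair_freq_step q qa b m Hq Hqa Hb).
  specialize (IH (m + 1) ltac:(nra) Hqa ltac:(lra)).
  rewrite S_INR. replace (m + (INR d + 1)) with (m + 1 + INR d) by ring. lra.
Qed.

Lemma pair_freq_separated q qa b (m m' : Z) : 0 <= qa ->
  0 <= q <= 2 * IZR m ^ 2 -> Rabs b <= IZR m ->
  0 <= q <= 2 * IZR m' ^ 2 -> Rabs b <= IZR m' ->
  IZR (Z.abs (m - m')) / 4 <= Rabs (pair_freq q qa b (IZR m) - pair_freq q qa b (IZR m')).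
Proof.
  intros Hqa Hm Hbm Hm' Hbm'.
  assert (Hgap : forall k l : Z, 0 <= q <= 2 * IZR k ^ 2 -> Rabs b <= IZR k -> (k <= l)%Z ->
            IZR (l - k) / 4 <= pair_freq q qa b (IZR l) - pair_freq q qa b (IZR k)).
  { intros k l Hk Hbk Hkl.
    pose proof (pair_freq_gap_nat q qa b (Z.to_nat (l - k)) (IZR k) Hk Hqa Hbk) as H.
    rewrite INR_IZR_INZ, Z2Nat.id, <- plus_IZR in H by lia.
    replace (k + (l - k))%Z with l in H by ring. lra. }
  destruct (Z_le_dec m m').
  - specialize (Hgap m m' Hm Hbm l). replace (Z.abs (m - m')) with (m' - m)%Z by lia.
    assert (0 <= IZR (m' - m)) by (apply IZR_le; lia). rewrite Rabs_minus_sym, Rabs_right; lra.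
  - specialize (Hgap m' m Hm' Hbm' ltac:(lia)). replace (Z.abs (m - m')) with (m - m')%Z by lia.
    assert (0 <= IZR (m - m')) by (apply IZR_le; lia). rewrite Rabs_right; lra.
Qed.

Lemma pair_freq_lsum_le (K M : nat) (P : Z -> Prop) q qa b lam :
  (M <= K)%nat -> 0 <= q -> 0 <= qa ->
  (forall m, P m -> (Z.abs m <= Z.of_nat M)%Z /\ q <= 2 * IZR m ^ 2 /\ b ^ 2 <= IZR m ^ 2) ->
  lsum (zrange K) (fun m => iverson (P m) * mininv (lam - pair_freq q qa b (IZR m)))
    <= 32 * (2 + ln (INR (2 * M + 1))).
Proof.
  intros HMK Hq Hqa HP.
  set (Ppos := fun m => P m /\ (0 <= m)%Z). set (Pneg := fun m => P m /\ ~ (0 <= m)%Z).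
  rewrite (lsum_ext _ _ (fun m => iverson (Ppos m) * mininv (lam - pair_freq q qa b (IZR m))
                          + iverson (Pneg m) * mininv (lam - pair_freq q qa (- b) (IZR (- m))))).
  2: { intros m _. unfold Ppos, Pneg.
       rewrite opp_IZR, <- pair_freq_opp, (iverson_split (P m) (0 <= m)%Z). ring. }
  rewrite lsum_plus.
  assert (Habs : forall b' m, b' ^ 2 <= IZR m ^ 2 -> (0 <= m)%Z -> Rabs b' <= IZR m).
  { intros b' m Hb Hm. rewrite <- (Rabs_right (IZR m)) by (apply Rle_ge, IZR_le; lia).
    apply Rsqr_le_abs_0. unfold Rsqr. nra. }
  replace (32 * (2 + ln (INR (2 * M + 1)))) with
    (16 * (2 + ln (INR (2 * M + 1))) + 16 * (2 + ln (INR (2 * M + 1)))) by ring.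
  apply Rplus_le_compat.
  - apply (separated_lsum_mininv_le K M Ppos (fun m => pair_freq q qa b (IZR m))); auto.
    + intros m [Pm _]. apply HP, Pm.
    + intros m m' [Pm Hm] [Pm' Hm'].
      destruct (HP m Pm) as [_ [H1 H2]]. destruct (HP m' Pm') as [_ [H1' H2']].
      apply pair_freq_separated; auto.
  - assert (Hneg : forall k, Pneg k -> 0 <= q <= 2 * IZR (- k) ^ 2 /\ Rabs (- b) <= IZR (- k)).
    { intros k [Pk Hk]. destruct (HP k Pk) as [_ [H1 H2]]. split.
      - rewrite opp_IZR. nra.
      - apply Habs; [rewrite opp_IZR; nra | lia]. }
    apply (separated_lsum_mininv_le K M Pneg (fun m => pair_freq q qa (- b) (IZR (- m)))); auto.
    + intros m [Pm _]. apply HP, Pm.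
    + intros m m' Hm Hm'. replace (Z.abs (m - m')) with (Z.abs (- m - - m')) by lia.
      apply pair_freq_separated; try apply Hneg; auto.
Qed.

(** * Counting near-resonant frequencies on a dyadic shell *)

Definition shell (N : R) (n : Z3) : Prop := N / 2 < Z3norm n < 2 * N.

Definition omega (a n : Z3) : R := jbr (Z3add a n) + jbr n.

Lemma Z3norm_sq x y z : Z3norm (x, y, z) ^ 2 = IZR x ^ 2 + IZR y ^ 2 + IZR z ^ 2.
Proof. apply pow2_sqrt. nra. Qed.

Lemma Z3norm_nonneg n : 0 <= Z3norm n.
Proof. destruct n as [[x y] z]. apply sqrt_pos. Qed.

Lemma Z3norm_opp n : Z3norm (Z3opp n) = Z3norm n.
Proof. destruct n as [[x y] z]. simpl. rewrite !opp_IZR. f_equal. ring. Qed.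

Lemma jbr_coord x y z : jbr (x, y, z) = sqrt (1 + IZR x ^ 2 + IZR y ^ 2 + IZR z ^ 2).
Proof. unfold jbr. rewrite Z3norm_sq. f_equal. ring. Qed.

Lemma jbr_opp n : jbr (Z3opp n) = jbr n.
Proof. unfold jbr. now rewrite Z3norm_opp. Qed.

Lemma jbr_ge_1 n : 1 <= jbr n.
Proof.
  unfold jbr. rewrite <- sqrt_1 at 1. apply sqrt_le_1_alt.
  pose proof (pow2_ge_0 (Z3norm n)). lra.
Qed.

Lemma jbr_ge_norm n : Z3norm n <= jbr n.
Proof.
  unfold jbr. rewrite <- (sqrt_pow2 (Z3norm n)) at 1 by apply Z3norm_nonneg.
  apply sqrt_le_1_alt. lra.
Qed.

Lemma omega_coord a1 a2 a3 x y z : omega (a1, a2, a3) (x, y, z) =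
  sqrt (1 + (IZR a1 + IZR x) ^ 2 + (IZR a2 + IZR y) ^ 2 + (IZR a3 + IZR z) ^ 2)
  + sqrt (1 + IZR x ^ 2 + IZR y ^ 2 + IZR z ^ 2).
Proof. unfold omega. simpl Z3add. now rewrite !jbr_coord, !plus_IZR. Qed.

Lemma shell_sq N x y z : shell N (x, y, z) ->
  N ^ 2 / 4 < IZR x ^ 2 + IZR y ^ 2 + IZR z ^ 2 < 4 * N ^ 2.
Proof.
  intros [H1 H2]. rewrite <- Z3norm_sq. pose proof (Z3norm_nonneg (x, y, z)). split; nra.
Qed.

Lemma Zabs_le_of_sq_lt (M : nat) (z : Z) : IZR z ^ 2 < INR M ^ 2 -> (Z.abs z <= Z.of_nat M)%Z.
Proof.
  intros H. assert (Hlt : Rabs (IZR z) < Rabs (INR M)) by (apply Rsqr_lt_abs_0; unfold Rsqr; nra).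
  rewrite <- abs_IZR, Rabs_right, INR_IZR_INZ in Hlt by (apply Rle_ge, pos_INR).
  apply lt_IZR in Hlt. lia.
Qed.

Definition cone (N : R) (x y z : Z) : Prop :=
  N ^ 2 / 4 < IZR x ^ 2 + IZR y ^ 2 + IZR z ^ 2 < 4 * N ^ 2 /\ IZR x ^ 2 + IZR y ^ 2 <= 2 * IZR z ^ 2.

Lemma cone_lsum_le (N : R) (M K : nat) (v : Z -> Z -> Z -> R) (qa : Z -> Z -> R) (b lam : R) :
  0 <= N -> INR M = 2 * N -> (M <= K)%nat -> b ^ 2 <= N ^ 2 / 16 ->
  (forall x y, 0 <= qa x y) ->
  (forall x y z, v x y z = pair_freq (IZR x ^ 2 + IZR y ^ 2) (qa x y) b (IZR z)) ->
  lsum (zrange K) (fun x => lsum (zrange K) (fun y => lsum (zrange K) (fun z =>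
     iverson (cone N x y z) * mininv (lam - v x y z))))
  <= INR (2 * M + 1) * (INR (2 * M + 1) * (32 * (2 + ln (INR (2 * M + 1))))).
Proof.
  intros HN HM HMK Hb Hqa Hv.
  assert (Hln : 0 <= ln (INR (2 * M + 1))) by (rewrite <- ln_1; apply ln_le; [lra|]; apply (le_INR 1); lia).
  apply lsum3_le_box; auto; [lra | |].
  - intros x y. rewrite (lsum_ext _ _ (fun z => iverson (cone N x y z)
                   * mininv (lam - pair_freq (IZR x ^ 2 + IZR y ^ 2) (qa x y) b (IZR z))))
      by (intros; now rewrite Hv).
    apply pair_freq_lsum_le; auto; [nra|].
    intros z [[H1 H2] H3]. split; [apply Zabs_le_of_sq_lt; rewrite HM; nra | split; nra].
  - intros x y z Hout. rewrite iverson_false; [ring|]. intros [[_ H] _].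
    destruct Hout as [Hx|Hx]; apply Z.lt_nge in Hx; apply Hx, Zabs_le_of_sq_lt; rewrite HM; nra.
Qed.

Lemma shell_le_cones N x y z :
  iverson (shell N (x, y, z)) <= iverson (cone N x y z) + iverson (cone N x z y) + iverson (cone N y z x).
Proof.
  pose proof (iverson_bounds (cone N x y z)). pose proof (iverson_bounds (cone N x z y)).
  pose proof (iverson_bounds (cone N y z x)).
  destruct (classic (shell N (x, y, z))) as [Hs|Hs]; [|rewrite iverson_false by exact Hs; lra].
  rewrite iverson_true by exact Hs. apply shell_sq in Hs.
  destruct (Rle_dec (IZR x ^ 2 + IZR y ^ 2) (2 * IZR z ^ 2)).
  { rewrite (iverson_true (cone N x y z)) by (split; lra). lra. }
  destruct (Rle_dec (IZR x ^ 2 + IZR z ^ 2) (2 * IZR y ^ 2)).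
  { rewrite (iverson_true (cone N x z y)) by (split; lra). lra. }
  rewrite (iverson_true (cone N y z x)) by (split; lra). lra.
Qed.

(* In each of the three cones around the coordinate axes the frequency is separated
   along the axis, so each line of the cone contributes only logarithmically. *)
Lemma shell_mininv_lsum3_le (N : R) (M K : nat) (a : Z3) (lam : R) :
  0 <= N -> INR M = 2 * N -> (M <= K)%nat -> Z3norm a <= N / 4 ->
  lsum3 K (fun n => iverson (shell N n) * mininv (lam - omega a n))
  <= 3 * (INR (2 * M + 1) * (INR (2 * M + 1) * (32 * (2 + ln (INR (2 * M + 1)))))).
Proof.
  intros HN HM HMK Ha. destruct a as [[a1 a2] a3].
  assert (Hai : IZR a1 ^ 2 <= N ^ 2 / 16 /\ IZR a2 ^ 2 <= N ^ 2 / 16 /\ IZR a3 ^ 2 <= N ^ 2 / 16).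
  { pose proof (Z3norm_sq a1 a2 a3). pose proof (Z3norm_nonneg (a1, a2, a3)).
    pose proof (pow2_ge_0 (IZR a1)). pose proof (pow2_ge_0 (IZR a2)). pose proof (pow2_ge_0 (IZR a3)).
    assert (Z3norm (a1, a2, a3) ^ 2 <= N ^ 2 / 16) by nra. lra. }
  destruct Hai as [Ha1 [Ha2 Ha3]].
  set (F := fun n => mininv (lam - omega (a1, a2, a3) n)).
  set (T1 := fun x y z => iverson (cone N x y z) * F (x, y, z)).
  set (T2 := fun x y z => iverson (cone N x z y) * F (x, y, z)).
  set (T3 := fun x y z => iverson (cone N y z x) * F (x, y, z)).
  apply Rle_trans with (lsum (zrange K) (fun x => lsum (zrange K) (fun y => lsum (zrange K) (fun z =>
     T1 x y z + T2 x y z + T3 x y z)))).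
  { unfold lsum3. apply lsum_le; intros x _; apply lsum_le; intros y _; apply lsum_le; intros z _.
    unfold T1, T2, T3, F. pose proof (shell_le_cones N x y z).
    pose proof (mininv_nonneg (lam - omega (a1, a2, a3) (x, y, z))). nra. }
  rewrite (lsum_ext _ _ (fun x => lsum (zrange K) (fun y => lsum (zrange K) (T1 x y))
           + lsum (zrange K) (fun z => lsum (zrange K) (fun y => T2 x y z))
           + lsum (zrange K) (fun y => lsum (zrange K) (T3 x y)))).
  2: { intros x _.
       rewrite (lsum_ext _ _ (fun y => lsum (zrange K) (T1 x y) + lsum (zrange K) (T2 x y)
                                     + lsum (zrange K) (T3 x y)))
         by (intros; rewrite <- !lsum_plus; reflexivity).
       now rewrite !lsum_plus, (lsum_swap (zrange K) (zrange K) (T2 x)). }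
  rewrite !lsum_plus, (lsum_swap (zrange K) (zrange K) (fun x y => lsum (zrange K) (T3 x y))).
  rewrite (lsum_ext _ (fun y => lsum (zrange K) (fun x => lsum (zrange K) (T3 x y)))
             (fun y => lsum (zrange K) (fun z => lsum (zrange K) (fun x => T3 x y z))))
    by (intros; apply lsum_swap).
  assert (Hsq : forall u v : R, 0 <= u ^ 2 + v ^ 2)
    by (intros; apply Rplus_le_le_0_compat; apply pow2_ge_0).
  unfold T1, T2, T3, F.
  pose proof (cone_lsum_le N M K (fun x y z => omega (a1, a2, a3) (x, y, z))
    (fun x y => (IZR a1 + IZR x) ^ 2 + (IZR a2 + IZR y) ^ 2) (IZR a3) lam HN HM HMK Ha3 ltac:(intros; apply Hsq)
    ltac:(intros; cbv beta; rewrite omega_coord; unfold pair_freq; f_equal; f_equal; ring)).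
  pose proof (cone_lsum_le N M K (fun x z y => omega (a1, a2, a3) (x, y, z))
    (fun x z => (IZR a1 + IZR x) ^ 2 + (IZR a3 + IZR z) ^ 2) (IZR a2) lam HN HM HMK Ha2 ltac:(intros; apply Hsq)
    ltac:(intros; cbv beta; rewrite omega_coord; unfold pair_freq; f_equal; f_equal; ring)).
  pose proof (cone_lsum_le N M K (fun y z x => omega (a1, a2, a3) (x, y, z))
    (fun y z => (IZR a2 + IZR y) ^ 2 + (IZR a3 + IZR z) ^ 2) (IZR a1) lam HN HM HMK Ha1 ltac:(intros; apply Hsq)
    ltac:(intros; cbv beta; rewrite omega_coord; unfold pair_freq; f_equal; f_equal; ring)).
  simpl in *. lra.
Qed.

Lemma shell_lsum3_le (N : R) (M K : nat) : 0 <= N -> INR M = 2 * N -> (M <= K)%nat ->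
  lsum3 K (fun n => iverson (shell N n)) <= INR (2 * M + 1) * (INR (2 * M + 1) * INR (2 * M + 1)).
Proof.
  intros HN HM HMK.
  assert (Hbox : forall x y z, shell N (x, y, z) ->
            (Z.abs x <= Z.of_nat M /\ Z.abs y <= Z.of_nat M /\ Z.abs z <= Z.of_nat M)%Z).
  { intros x y z Hs. apply shell_sq in Hs.
    pose proof (pow2_ge_0 (IZR x)). pose proof (pow2_ge_0 (IZR y)). pose proof (pow2_ge_0 (IZR z)).
    split; [|split]; apply Zabs_le_of_sq_lt; rewrite HM; nra. }
  apply lsum3_le_box; auto; [apply pos_INR | |].
  - intros x y. rewrite <- (Rmult_1_r (INR (2 * M + 1))). apply lsum_zrange_le; auto.
    + intros z Hz. apply iverson_false. intros Hs. apply Hbox in Hs. lia.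
    + intros z. apply iverson_bounds.
  - intros x y z Hout. apply iverson_false. intros Hs. apply Hbox in Hs. lia.
Qed.

(** * Oscillatory integrals *)

Definition ccontinuous (f : R -> C) (x : R) : Prop :=
  continuous (fun s => fst (f s)) x /\ continuous (fun s => snd (f s)) x.

Lemma continuous_Rplus (f g : R -> R) x :
  continuous f x -> continuous g x -> continuous (fun s => f s + g s) x.
Proof. apply (continuous_plus f g). Qed.

Lemma continuous_Rminus (f g : R -> R) x :
  continuous f x -> continuous g x -> continuous (fun s => f s - g s) x.
Proof. intros. apply (continuous_plus f (fun s => - g s)); auto. apply (continuous_opp g); auto. Qed.

Lemma continuous_Rmult (f g : R -> R) x :
  continuous f x -> continuous g x -> continuous (fun s => f s * g s) x.
Proof. apply (continuous_mult f g). Qed.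

Lemma continuous_affine (c mu x : R) : continuous (fun s => c + mu * s) x.
Proof.
  apply continuous_Rplus; [apply continuous_const|].
  apply continuous_Rmult; [apply continuous_const | apply continuous_id].
Qed.

Lemma ccontinuous_mult f g x :
  ccontinuous f x -> ccontinuous g x -> ccontinuous (fun s => Cmult (f s) (g s)) x.
Proof.
  intros [f1 f2] [g1 g2]. split; simpl.
  - apply continuous_Rminus; apply continuous_Rmult; auto.
  - apply continuous_Rplus; apply continuous_Rmult; auto.
Qed.

Lemma ccontinuous_plus f g x :
  ccontinuous f x -> ccontinuous g x -> ccontinuous (fun s => Cplus (f s) (g s)) x.
Proof. intros [f1 f2] [g1 g2]. split; simpl; apply continuous_Rplus; auto. Qed.

Lemma ccontinuous_RtoC (r : R -> R) x : continuous r x -> ccontinuous (fun s => RtoC (r s)) x.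
Proof. intros H. split; simpl; [exact H | apply continuous_const]. Qed.

Lemma ccontinuous_cexpi (g : R -> R) x : continuous g x -> ccontinuous (fun s => cexpi (g s)) x.
Proof. intros H. split; simpl; [apply continuous_cos_comp | apply continuous_sin_comp]; exact H. Qed.

Lemma ccontinuous_comp (f : R -> C) (g : R -> R) x :
  continuous g x -> ccontinuous f (g x) -> ccontinuous (fun s => f (g s)) x.
Proof.
  intros Hg [H1 H2]. split; [apply (continuous_comp g (fun y => fst (f y))) |
                             apply (continuous_comp g (fun y => snd (f y)))]; auto.
Qed.

Lemma ex_RInt_ccontinuous (f : R -> C) a b :
  (forall x, Rmin a b <= x <= Rmax a b -> ccontinuous f x) -> ex_RInt (V := C_R_NormedModule) f a b.
Proof.
  intros H.
  destruct (ex_RInt_continuous (V := R_CompleteNormedModule) (fun s => fst (f s)) a b) as [l1 E1];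
    [intros; apply H; auto|].
  destruct (ex_RInt_continuous (V := R_CompleteNormedModule) (fun s => snd (f s)) a b) as [l2 E2];
    [intros; apply H; auto|].
  exists (l1, l2). apply (is_RInt_fct_extend_pair (U := R_NormedModule) (V := R_NormedModule)); auto.
Qed.

Lemma ccontinuous_is_derive (F : R -> C) x d :
  is_derive (K := R_AbsRing) (V := C_R_NormedModule) F x d -> ccontinuous F x.
Proof.
  intros H. assert (Hc : continuous (T := R_UniformSpace) (U := C_R_NormedModule) F x)
    by (apply ex_derive_continuous; exists d; exact H).
  split; apply (continuous_comp F); auto; rewrite (surjective_pairing (F x));
    [apply continuous_fst | apply continuous_snd].
Qed.

Lemma is_derive_fst (F : R -> C) x d : is_derive (K := R_AbsRing) (V := C_R_NormedModule) F x d ->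
  is_derive (fun s => fst (F s)) x (fst d).
Proof.
  intros H.
  apply (filterdiff_comp F (fun z : C_R_NormedModule => fst z) _ (fun z : C_R_NormedModule => fst z) H).
  apply filterdiff_linear, (is_linear_fst (U := R_NormedModule) (V := R_NormedModule)).
Qed.

Lemma is_derive_snd (F : R -> C) x d : is_derive (K := R_AbsRing) (V := C_R_NormedModule) F x d ->
  is_derive (fun s => snd (F s)) x (snd d).
Proof.
  intros H.
  apply (filterdiff_comp F (fun z : C_R_NormedModule => snd z) _ (fun z : C_R_NormedModule => snd z) H).
  apply filterdiff_linear, (is_linear_snd (U := R_NormedModule) (V := R_NormedModule)).
Qed.

Lemma Cmod_RInt_le (f : R -> C) a b M :
  (forall x, Rmin a b <= x <= Rmax a b -> Cmod (f x) <= M) ->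
  (forall x, Rmin a b <= x <= Rmax a b -> ccontinuous f x) ->
  Cmod (RInt (V := CV) f a b) <= Rabs (b - a) * M.
Proof.
  intros H Hc. rewrite Cmod_norm. apply (norm_RInt_le_const_abs (V := C_R_NormedModule) f a b).
  - intros. rewrite <- Cmod_norm. auto.
  - apply (RInt_correct (V := CV)), ex_RInt_ccontinuous. exact Hc.
Qed.

Lemma Cmod_cexpi th : Cmod (cexpi th) = 1.
Proof.
  unfold Cmod, cexpi. simpl fst; simpl snd. rewrite <- sqrt_1. f_equal.
  rewrite <- (sin2_cos2 th). unfold Rsqr. ring.
Qed.

Lemma cexpi_add_PI th : cexpi (th + PI) = Copp (cexpi th).
Proof. unfold cexpi. now rewrite neg_cos, neg_sin. Qed.

Lemma lipschitz_of_derive_le (f : R -> R) (al be L : R) :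
  (forall s, al <= s <= be -> exists d, is_derive f s d /\ Rabs d <= L) ->
  forall x y, al <= x <= be -> al <= y <= be -> Rabs (f y - f x) <= L * Rabs (y - x).
Proof.
  intros Hd x y Hx Hy.
  assert (Hin : forall z, Rmin x y <= z <= Rmax x y -> al <= z <= be)
    by (unfold Rmin, Rmax; intros z Hz; destruct Rle_dec; lra).
  assert (Hdf : forall z, Rmin x y <= z <= Rmax x y -> is_derive f z (Derive f z) /\ Rabs (Derive f z) <= L).
  { intros z Hz. destruct (Hd z (Hin z Hz)) as [d [Hfd HdL]].
    rewrite (is_derive_unique f z d Hfd). auto. }
  destruct (MVT_gen f x y (Derive f)) as [c [Hc E]].
  - intros z Hz. apply Hdf. lra.
  - intros z Hz. apply continuity_pt_filterlim, (ex_derive_continuous (K := R_AbsRing) (V := R_NormedModule)).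
    exists (Derive f z). apply Hdf, Hz.
  - rewrite E, Rabs_mult. apply Rmult_le_compat_r; [apply Rabs_pos | apply Hdf, Hc].
Qed.

Lemma Cmod_lipschitz_of_derive_le (F : R -> C) (al be L : R) :
  (forall s, al <= s <= be ->
     exists d, is_derive (K := R_AbsRing) (V := C_R_NormedModule) F s d /\ Cmod d <= L) ->
  forall x y, al <= x <= be -> al <= y <= be -> Cmod (F y - F x)%C <= 2 * L * Rabs (y - x).
Proof.
  intros Hd x y Hx Hy.
  assert (Hfst : Rabs (fst (F y) - fst (F x)) <= L * Rabs (y - x)).
  { apply (lipschitz_of_derive_le (fun s => fst (F s)) al be); auto.
    intros s Hs. destruct (Hd s Hs) as [d [HFd HdL]]. exists (fst d). split; [now apply is_derive_fst|].
    pose proof (Rmax_Cmod d). pose proof (Rmax_l (Rabs (fst d)) (Rabs (snd d))). lra. }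
  assert (Hsnd : Rabs (snd (F y) - snd (F x)) <= L * Rabs (y - x)).
  { apply (lipschitz_of_derive_le (fun s => snd (F s)) al be); auto.
    intros s Hs. destruct (Hd s Hs) as [d [HFd HdL]]. exists (snd d). split; [now apply is_derive_snd|].
    pose proof (Rmax_Cmod d). pose proof (Rmax_r (Rabs (fst d)) (Rabs (snd d))). lra. }
  assert (Hs2 : sqrt 2 <= 2) by (rewrite <- (sqrt_square 2) at 2 by lra; apply sqrt_le_1_alt; lra).
  pose proof (Cmod_2Rmax (F y - F x)%C) as H. simpl in H.
  assert (HL : 0 <= L * Rabs (y - x)) by (pose proof (Rabs_pos (fst (F y) - fst (F x))); lra).
  assert (Rmax (Rabs (fst (F y) + - fst (F x))) (Rabs (snd (F y) + - snd (F x))) <= L * Rabs (y - x))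
    by (apply Rmax_lub; assumption).
  pose proof (sqrt_pos 2). nra.
Qed.

(* The projection of [s] onto [[al, be]]: [max al (min s be)] written with [Rabs] so
   that continuity comes from [continuous_Rabs_comp]. *)
Definition clamp (al be s : R) : R := (al + be) / 2 + (Rabs (s - al) - Rabs (s - be)) / 2.

Lemma clamp_in al be s : al <= be -> al <= clamp al be s <= be.
Proof.
  intros H. unfold clamp. unfold Rabs. repeat destruct Rcase_abs; lra.
Qed.

Lemma clamp_id al be s : al <= s <= be -> clamp al be s = s.
Proof. intros H. unfold clamp. rewrite (Rabs_right (s - al)), (Rabs_left1 (s - be)) by lra. field. Qed.

Lemma clamp_lipschitz al be s s' : Rabs (clamp al be s - clamp al be s') <= Rabs (s - s').
Proof. unfold clamp. unfold Rabs. repeat destruct Rcase_abs; lra. Qed.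

Lemma continuous_clamp al be x : continuous (clamp al be) x.
Proof.
  unfold clamp. apply continuous_Rplus; [apply continuous_const|].
  apply (continuous_Rmult (fun s => Rabs (s - al) - Rabs (s - be)) (fun _ => / 2));
    [|apply continuous_const].
  apply continuous_Rminus; apply continuous_Rabs_comp, continuous_Rminus;
    (apply continuous_id || apply continuous_const).
Qed.

Section OscillatoryIntegral.
Variables (F : R -> C) (al be L M c mu : R).
Hypothesis Hab : al <= be.
Hypothesis HF' : forall s, al <= s <= be ->
  exists d, is_derive (K := R_AbsRing) (V := C_R_NormedModule) F s d /\ Cmod d <= L.
Hypothesis HF : forall s, al <= s <= be -> Cmod (F s) <= M.

Let Fc (s : R) : C := F (clamp al be s).
Let wave (s : R) : C := cexpi (c + mu * s).

Lemma deriv_bound_nonneg : 0 <= L.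
Proof. destruct (HF' al) as [d [_ Hd]]; [lra|]. pose proof (Cmod_ge_0 d). lra. Qed.

Lemma ccontinuous_Fc x : ccontinuous Fc x.
Proof.
  apply (ccontinuous_comp F (clamp al be)); [apply continuous_clamp|].
  destruct (HF' (clamp al be x) (clamp_in al be x Hab)) as [d [Hd _]].
  eapply ccontinuous_is_derive; eauto.
Qed.

Lemma ccontinuous_wave_Fc (h x : R) : ccontinuous (fun s => Cmult (wave s) (Fc (s + h))) x.
Proof.
  apply ccontinuous_mult; [apply ccontinuous_cexpi, continuous_affine|].
  apply (ccontinuous_comp Fc (fun s => s + h)); [|apply ccontinuous_Fc].
  apply continuous_Rplus; [apply continuous_id | apply continuous_const].
Qed.

Lemma Cmod_wave_Fc (h x : R) : Cmod (Cmult (wave x) (Fc (x + h))) <= M.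
Proof. unfold wave, Fc. rewrite Cmod_mult, Cmod_cexpi, Rmult_1_l. apply HF, clamp_in, Hab. Qed.

Lemma RInt_wave_Fc : RInt (V := CV) (fun s => Cmult (wave s) (F s)) al be
                   = RInt (V := CV) (fun s => Cmult (wave s) (Fc (s + 0))) al be.
Proof.
  apply RInt_ext. intros x Hx. rewrite Rmin_left, Rmax_right in Hx by lra.
  unfold Fc. now rewrite Rplus_0_r, clamp_id by lra.
Qed.

Lemma Cmod_oscillatory_integral_le_length :
  Cmod (RInt (V := CV) (fun s => Cmult (wave s) (F s)) al be) <= (be - al) * M.
Proof.
  rewrite RInt_wave_Fc, <- (Rabs_right (be - al)) by lra.
  apply Cmod_RInt_le; intros; [apply Cmod_wave_Fc | apply ccontinuous_wave_Fc].
Qed.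

(* Shifting by half a period [h = PI / mu] flips the sign of the wave. *)
Lemma RInt_wave_half_period_shift (h : R) : h = PI / mu -> mu <> 0 ->
  RInt (V := CV) (fun s => Cmult (wave s) (Fc (s + 0))) al be
  = opp (RInt (V := CV) (fun s => Cmult (wave s) (Fc (s + h))) (al - h) (be - h)).
Proof.
  intros Hh Hmu.
  rewrite <- (RInt_opp (V := CV)) by (apply ex_RInt_ccontinuous; intros; apply ccontinuous_wave_Fc).
  replace al with (1 * (al - h) + h) at 1 by ring. replace be with (1 * (be - h) + h) at 1 by ring.
  rewrite <- (RInt_comp_lin (V := CV) _ 1 h).
  - apply RInt_ext. intros x _. unfold wave.
    replace (c + mu * (1 * x + h)) with (c + mu * x + PI) by (subst h; field; exact Hmu).
    rewrite cexpi_add_PI, Rplus_0_r, Rmult_1_l, scal_R_Cmult.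
    change (opp (Cmult (cexpi (c + mu * x)) (Fc (x + h))))
      with (Copp (Cmult (cexpi (c + mu * x)) (Fc (x + h)))).
    apply injective_projections; simpl; ring.
  - apply ex_RInt_ccontinuous. intros. apply ccontinuous_wave_Fc.
Qed.

Lemma Fc_lipschitz x y : Cmod (Fc y - Fc x)%C <= 2 * L * Rabs (y - x).
Proof.
  unfold Fc. eapply Rle_trans.
  - apply (Cmod_lipschitz_of_derive_le F al be L HF'); apply clamp_in, Hab.
  - pose proof deriv_bound_nonneg. apply Rmult_le_compat_l; [lra | apply clamp_lipschitz].
Qed.

Lemma RInt_wave_double_eq (h : R) : h = PI / mu -> mu <> 0 ->
  let G := fun s => Cmult (wave s) (Fc (s + 0)) in
  let G2 := fun s => Cmult (wave s) (Fc (s + h)) in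
  (RInt (V := CV) G al be + RInt (V := CV) G al be)%C
  = (RInt (V := CV) (fun s => Cminus (G s) (G2 s)) al be - RInt (V := CV) G2 (al - h) al
     - RInt (V := CV) G2 be (be - h))%C.
Proof.
  intros Hh Hmu G G2.
  assert (Hex : forall g a b, (forall x, ccontinuous g x) -> ex_RInt (V := C_R_NormedModule) g a b)
    by (intros; apply ex_RInt_ccontinuous; auto).
  assert (HG : forall x, ccontinuous G x) by (intros; apply ccontinuous_wave_Fc).
  assert (HG2 : forall x, ccontinuous G2 x) by (intros; apply ccontinuous_wave_Fc).
  replace (RInt (V := CV) (fun s => Cminus (G s) (G2 s)) al be)
    with (minus (RInt (V := CV) G al be) (RInt (V := CV) G2 al be))
    by (symmetry; apply (RInt_minus (V := CV)); auto).
  assert (Hshift : RInt (V := CV) G al be = opp (RInt (V := CV) G2 (al - h) (be - h)))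
    by (apply RInt_wave_half_period_shift; auto).
  rewrite Hshift at 2.
  rewrite <- (RInt_Chasles (V := CV) G2 (al - h) be (be - h)), <- (RInt_Chasles (V := CV) G2 (al - h) al be)
    by auto.
  apply injective_projections; simpl; unfold minus, plus, opp; simpl; ring.
Qed.

Lemma Cmod_double z : Cmod (z + z)%C = 2 * Cmod z.
Proof.
  replace (z + z)%C with (Cmult (RtoC 2) z) by (apply injective_projections; simpl; ring).
  rewrite Cmod_mult, Cmod_R, Rabs_right; lra.
Qed.

(* Averaging the integral with its half-period shift leaves a difference term of size
   [(be - al) L |h|] and two boundary pieces of length [|h|]. *)
Lemma Cmod_oscillatory_integral_le : mu <> 0 ->
  Cmod (RInt (V := CV) (fun s => Cmult (wave s) (F s)) al be) <= PI / Rabs mu * ((be - al) * L + M).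
Proof.
  intros Hmu. set (h := PI / mu).
  pose proof (RInt_wave_double_eq h eq_refl Hmu) as H2I. cbv zeta in H2I.
  set (G := fun s => Cmult (wave s) (Fc (s + 0))) in H2I.
  set (G2 := fun s => Cmult (wave s) (Fc (s + h))) in H2I.
  rewrite RInt_wave_Fc. fold G. set (I := RInt (V := CV) G al be) in *.
  set (P := RInt (V := CV) G2 (al - h) al) in *. set (Rr := RInt (V := CV) G2 be (be - h)) in *.
  set (D := RInt (V := CV) (fun s => Cminus (G s) (G2 s)) al be) in *.
  assert (Habs_h : Rabs h = PI / Rabs mu)
    by (unfold h, Rdiv; rewrite Rabs_mult, Rabs_inv, (Rabs_right PI) by (pose proof PI_RGT_0; lra);
        reflexivity).
  assert (ND : Cmod D <= Rabs (be - al) * (2 * L * Rabs h)).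
  { apply Cmod_RInt_le.
    - intros x _. unfold G, G2.
      replace (Cminus (Cmult (wave x) (Fc (x + 0))) (Cmult (wave x) (Fc (x + h))))
        with (Cmult (wave x) (Cminus (Fc (x + 0)) (Fc (x + h)))) by ring.
      rewrite Cmod_mult. unfold wave. rewrite Cmod_cexpi, Rmult_1_l.
      eapply Rle_trans; [apply Fc_lipschitz|].
      replace (x + 0 - (x + h)) with (- h) by ring. rewrite Rabs_Ropp. lra.
    - intros x _. destruct (ccontinuous_wave_Fc 0 x) as [A1 A2], (ccontinuous_wave_Fc h x) as [B1 B2].
      split; apply continuous_Rminus; auto. }
  assert (NP : Cmod P <= Rabs (al - (al - h)) * M)
    by (apply Cmod_RInt_le; intros; [apply Cmod_wave_Fc | apply ccontinuous_wave_Fc]).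
  assert (NR : Cmod Rr <= Rabs (be - h - be) * M)
    by (apply Cmod_RInt_le; intros; [apply Cmod_wave_Fc | apply ccontinuous_wave_Fc]).
  replace (al - (al - h)) with h in NP by ring. replace (be - h - be) with (- h) in NR by ring.
  rewrite Rabs_Ropp in NR. rewrite Rabs_right in ND by lra.
  assert (Htri : 2 * Cmod I <= Cmod D + Cmod P + Cmod Rr).
  { rewrite <- Cmod_double, H2I. unfold Cminus.
    eapply Rle_trans; [apply Cmod_triangle|]. rewrite Cmod_opp.
    eapply Rle_trans; [apply Rplus_le_compat_r, Cmod_triangle|]. rewrite Cmod_opp. lra. }
  rewrite <- Habs_h. pose proof deriv_bound_nonneg. pose proof (Rabs_pos h). nra.
Qed.
End OscillatoryIntegral.

Lemma Cmod_oscillatory_integral_le_mininv (F : R -> C) (al be L M c mu T : R) :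
  al <= be -> be - al <= T -> 1 <= T ->
  (forall s, al <= s <= be ->
     exists d, is_derive (K := R_AbsRing) (V := C_R_NormedModule) F s d /\ Cmod d <= L) ->
  (forall s, al <= s <= be -> Cmod (F s) <= M) ->
  Cmod (RInt (V := CV) (fun s => Cmult (cexpi (c + mu * s)) (F s)) al be)
  <= 2 * PI * T * (M + L) * mininv mu.
Proof.
  intros Hab HT HT1 HF' HF.
  pose proof (deriv_bound_nonneg F al be L Hab HF').
  assert (HM : 0 <= M) by (pose proof (HF al ltac:(lra)); pose proof (Cmod_ge_0 (F al)); lra).
  assert ((be - al) * L <= T * L) by (apply Rmult_le_compat_r; lra).
  assert (HTML : (be - al) * L + M <= T * (M + L)) by nra.
  pose proof PI_RGT_0. pose proof PI2_1.
  unfold mininv. destruct Rle_dec as [Hle|Hgt].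
  - eapply Rle_trans; [apply (Cmod_oscillatory_integral_le_length F al be L M c mu); auto|].
    assert ((be - al) * M <= T * M) by (apply Rmult_le_compat_r; lra).
    assert (0 <= T * (M + L)) by nra. nra.
  - assert (Hmu : mu <> 0) by (intros E; subst; rewrite Rabs_R0 in Hgt; lra).
    eapply Rle_trans; [apply (Cmod_oscillatory_integral_le F al be L M c mu); auto|].
    assert (Hi : 0 < / Rabs mu) by (apply Rinv_0_lt_compat; lra).
    replace (2 * PI * T * (M + L) * / Rabs mu) with (PI / Rabs mu * (2 * (T * (M + L))))
      by (unfold Rdiv; ring).
    apply Rmult_le_compat_l; [unfold Rdiv; nra | nra].
Qed.

Lemma sin_cos_cexpi_decomp p q psi :
  Cmult (RtoC (sin p * cos q)) (cexpi psi) =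
  Cplus (Cplus (Cmult (RtoC (1 / 4)) (cexpi (psi - (p + q) + PI / 2)))
               (Cmult (RtoC (1 / 4)) (cexpi (psi + (p + q) - PI / 2))))
        (Cmult (RtoC (1 / 2)) (Cmult (RtoC (sin (p - q))) (cexpi psi))).
Proof.
  unfold cexpi.
  rewrite (cos_plus (psi - (p + q))), (sin_plus (psi - (p + q))), (cos_minus (psi + (p + q))),
    (sin_minus (psi + (p + q))), cos_PI2, sin_PI2, (cos_minus psi), (sin_minus psi), (cos_plus psi),
    (sin_plus psi), cos_plus, sin_plus, sin_minus.
  apply injective_projections; simpl; field.
Qed.

Lemma Rabs_le_1_of_bounds x : -1 <= x <= 1 -> Rabs x <= 1.
Proof. intros H. unfold Rabs. destruct Rcase_abs; lra. Qed.

Lemma Rabs_sin_le x : Rabs (sin x) <= Rabs x.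
Proof.
  destruct (MVT_abs sin cos 0 x) as [c [E _]]; [intros; apply derivable_pt_lim_sin|].
  rewrite sin_0, !Rminus_0_r in E. rewrite E.
  pose proof (Rabs_le_1_of_bounds _ (COS_bound c)). pose proof (Rabs_pos x). nra.
Qed.

Lemma Rabs_sin_add_sin_le p q : Rabs (sin p + sin q) <= Rabs (p + q).
Proof.
  assert (E : sin ((p + q) / 2 + (p - q) / 2) + sin ((p + q) / 2 - (p - q) / 2)
             = 2 * (sin ((p + q) / 2) * cos ((p - q) / 2))) by (rewrite sin_plus, sin_minus; ring).
  replace ((p + q) / 2 + (p - q) / 2) with p in E by field.
  replace ((p + q) / 2 - (p - q) / 2) with q in E by field. rewrite E.
  replace (Rabs (p + q)) with (2 * Rabs ((p + q) / 2))
    by (unfold Rdiv; rewrite Rabs_mult, (Rabs_right (/ 2)) by lra; field).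
  rewrite !Rabs_mult, (Rabs_right 2) by lra.
  pose proof (Rabs_sin_le ((p + q) / 2)). pose proof (Rabs_le_1_of_bounds _ (COS_bound ((p - q) / 2))).
  pose proof (Rabs_pos (sin ((p + q) / 2))). pose proof (Rabs_pos (cos ((p - q) / 2))). nra.
Qed.

Lemma sqrt_add_sqrt_near_le u u' w q : 0 <= u -> 0 <= u' -> 1 <= w -> 0 <= q ->
  u + u' = 2 * w + 2 * q -> (w - q) ^ 2 <= u * u' ->
  Rabs (sqrt u + sqrt u' - 2 * sqrt w) <= q / sqrt w.
Proof.
  intros Hu Hu' Hw Hq Hsum Hprod2.
  pose proof (sqrt_sqrt u Hu). pose proof (sqrt_sqrt u' Hu'). pose proof (sqrt_sqrt w ltac:(lra)).
  pose proof (sqrt_pos u). pose proof (sqrt_pos u').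
  assert (Hsw : 1 <= sqrt w) by (rewrite <- sqrt_1; apply sqrt_le_1_alt; lra).
  assert (Hprod : w - q <= sqrt u * sqrt u').
  { destruct (Rle_dec (w - q) 0); [pose proof (Rmult_le_pos _ _ (sqrt_pos u) (sqrt_pos u')); lra|].
    rewrite <- sqrt_mult, <- (sqrt_pow2 (w - q)) by lra. apply sqrt_le_1_alt. exact Hprod2. }
  assert (Hlow : 2 * sqrt w <= sqrt u + sqrt u') by (apply Rsqr_incr_0_var; unfold Rsqr; nra).
  assert (Hup : sqrt u + sqrt u' <= 2 * sqrt w + q / sqrt w).
  { assert (0 <= q / sqrt w) by (apply Rdiv_le_0_compat; lra).
    apply Rsqr_incr_0_var; [|lra]. unfold Rsqr.
    replace ((2 * sqrt w + q / sqrt w) * (2 * sqrt w + q / sqrt w))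
      with (4 * (sqrt w * sqrt w) + 4 * q + (q / sqrt w) ^ 2) by (field; lra).
    pose proof (pow2_ge_0 (sqrt u - sqrt u')). pose proof (pow2_ge_0 (q / sqrt w)). nra. }
  rewrite Rabs_right by lra. lra.
Qed.

(* Parallelogram law for [U = 1 + |a + n|^2], [U' = 1 + |a - n|^2], [W = 1 + |n|^2], [Q = |a|^2],
   and Lagrange's identity for [U U' - (W - Q)^2]. *)
Lemma sqrt_parallelogram_le a1 a2 a3 n1 n2 n3 :
  let U := 1 + (a1 + n1) ^ 2 + (a2 + n2) ^ 2 + (a3 + n3) ^ 2 in
  let U' := 1 + (a1 - n1) ^ 2 + (a2 - n2) ^ 2 + (a3 - n3) ^ 2 in
  let W := 1 + n1 ^ 2 + n2 ^ 2 + n3 ^ 2 in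
  let Q := a1 ^ 2 + a2 ^ 2 + a3 ^ 2 in
  Rabs (sqrt U + sqrt U' - 2 * sqrt W) <= Q / sqrt W.
Proof.
  intros U U' W Q. apply sqrt_add_sqrt_near_le.
  - unfold U. pose proof (pow2_ge_0 (a1 + n1)). pose proof (pow2_ge_0 (a2 + n2)).
    pose proof (pow2_ge_0 (a3 + n3)). lra.
  - unfold U'. pose proof (pow2_ge_0 (a1 - n1)). pose proof (pow2_ge_0 (a2 - n2)).
    pose proof (pow2_ge_0 (a3 - n3)). lra.
  - unfold W. pose proof (pow2_ge_0 n1). pose proof (pow2_ge_0 n2). pose proof (pow2_ge_0 n3). lra.
  - unfold Q. pose proof (pow2_ge_0 a1). pose proof (pow2_ge_0 a2). pose proof (pow2_ge_0 a3). lra.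
  - unfold U, U', W, Q. ring.
  - set (x1 := n1 + a1). set (x2 := n2 + a2). set (x3 := n3 + a3).
    set (y1 := n1 - a1). set (y2 := n2 - a2). set (y3 := n3 - a3).
    assert (U * U' - (W - Q) ^ 2 = (x1 - y1) ^ 2 + (x2 - y2) ^ 2 + (x3 - y3) ^ 2
       + (x1 * y2 - x2 * y1) ^ 2 + (x1 * y3 - x3 * y1) ^ 2 + (x2 * y3 - x3 * y2) ^ 2)
      by (unfold U, U', W, Q, x1, x2, x3, y1, y2, y3; ring).
    pose proof (pow2_ge_0 (x1 - y1)). pose proof (pow2_ge_0 (x2 - y2)). pose proof (pow2_ge_0 (x3 - y3)).
    pose proof (pow2_ge_0 (x1 * y2 - x2 * y1)). pose proof (pow2_ge_0 (x1 * y3 - x3 * y1)).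
    pose proof (pow2_ge_0 (x2 * y3 - x3 * y2)). lra.
Qed.

Lemma indicator_iverson (J : R -> Prop) s : indicator J s = iverson (J s).
Proof. reflexivity. Qed.

Lemma interval_trace_endpoints (J : R -> Prop) t : is_interval J -> 0 <= t ->
  exists al be, 0 <= al <= be /\ be <= t /\
   forall s, 0 < s < t -> (al < s < be -> J s) /\ (J s -> al <= s <= be).
Proof.
  intros HJ Ht.
  destruct (classic (exists s, 0 < s < t /\ J s)) as [[s0 [Hs0 Js0]]|Hno].
  2: { exists 0, 0. split; [lra|]. split; [lra|]. intros s Hs. split; [lra|].
       intros Js. exfalso. eauto. }
  set (E := fun s => 0 < s < t /\ J s).
  destruct (completeness E) as [be [Hub Hlub]]; [exists t; intros x [Hx _]; lra | now exists s0|].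
  destruct (completeness (fun s => E (- s))) as [mal [Hub' Hlub']].
  { exists 0. intros x [Hx _]. lra. }
  { exists (- s0). unfold E. rewrite Ropp_involutive. auto. }
  assert (Hbe1 : s0 <= be) by (apply Hub; split; auto).
  assert (Hbe2 : be <= t) by (apply Hlub; intros x [Hx _]; lra).
  assert (Hal1 : - s0 <= mal) by (apply Hub'; unfold E; rewrite Ropp_involutive; split; auto).
  assert (Hal2 : mal <= 0) by (apply Hlub'; intros x [Hx _]; lra).
  exists (- mal), be. split; [lra|]. split; [lra|]. intros s Hs. split.
  - intros [H1 H2].
    assert (exists e1, E e1 /\ e1 <= s) as [e1 [[_ Je1] Hle1]].
    { apply NNPP. intros Hn. assert (mal <= - s); [|lra].
      apply Hlub'. intros x Hx. apply Rnot_lt_le. intros Hlt.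
      apply Hn. exists (- x). split; [exact Hx | lra]. }
    assert (exists e2, E e2 /\ s <= e2) as [e2 [[_ Je2] Hle2]].
    { apply NNPP. intros Hn. assert (be <= s); [|lra].
      apply Hlub. intros x Hx. apply Rnot_lt_le. intros Hlt. apply Hn. exists x. split; [exact Hx | lra]. }
    apply (HJ e1 s e2); auto.
  - intros Js. split.
    + assert (- s <= mal) by (apply Hub'; unfold E; rewrite Ropp_involutive; split; auto). lra.
    + apply Hub. split; auto.
Qed.

Lemma is_RInt_C0 a b : is_RInt (V := C_R_NormedModule) (fun _ => RtoC 0) a b (RtoC 0).
Proof.
  pose proof (is_RInt_const (V := C_R_NormedModule) a b (RtoC 0)) as H.
  rewrite scal_R_Cmult, Cmult_0_r in H. exact H.
Qed.

Lemma RInt_indicator_interval (J : R -> Prop) t al be (u : R -> R) (w : R -> C) :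
  0 <= al <= be -> be <= t ->
  (forall s, 0 < s < t -> (al < s < be -> J s) /\ (J s -> al <= s <= be)) ->
  ex_RInt (V := C_R_NormedModule) (fun s => Cmult (RtoC (u s)) (w s)) al be ->
  RInt (V := CV) (fun s => Cmult (RtoC (indicator J s * u s)) (w s)) 0 t
  = RInt (V := CV) (fun s => Cmult (RtoC (u s)) (w s)) al be.
Proof.
  intros Hab Hbt HJ Hex. apply (is_RInt_unique (V := CV)).
  set (I := RInt (V := CV) (fun s => Cmult (RtoC (u s)) (w s)) al be).
  assert (Hzero : forall a b, 0 <= a <= b -> b <= t -> (forall s, a < s < b -> ~ J s) ->
     is_RInt (V := C_R_NormedModule) (fun s => Cmult (RtoC (indicator J s * u s)) (w s)) a b (RtoC 0)).
  { intros a b Hab' Hbt' Hout. eapply is_RInt_ext; [|apply is_RInt_C0].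
    intros x Hx. rewrite Rmin_left, Rmax_right in Hx by lra.
    rewrite indicator_iverson, iverson_false by (apply Hout; lra).
    apply injective_projections; simpl; ring. }
  assert (Hout : forall s, 0 < s < t -> ~ (al <= s <= be) -> ~ J s)
    by (intros s Hs Hn Js; apply Hn, (HJ s Hs), Js).
  assert (Z1 := Hzero 0 al ltac:(lra) ltac:(lra) ltac:(intros s Hs; apply Hout; lra)).
  assert (Z3 := Hzero be t ltac:(lra) ltac:(lra) ltac:(intros s Hs; apply Hout; lra)).
  assert (Z2 : is_RInt (V := C_R_NormedModule) (fun s => Cmult (RtoC (indicator J s * u s)) (w s)) al be I).
  { eapply is_RInt_ext; [|apply (RInt_correct (V := CV)); exact Hex]. intros x Hx.
    rewrite Rmin_left, Rmax_right in Hx by lra.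
    rewrite indicator_iverson, iverson_true, Rmult_1_l by (apply (HJ x); lra). reflexivity. }
  pose proof (is_RInt_Chasles _ _ _ _ _ _ (is_RInt_Chasles _ _ _ _ _ _ Z1 Z2) Z3) as H.
  replace I with (plus (plus (RtoC 0) I) (RtoC 0)) by (apply injective_projections; simpl; ring).
  exact H.
Qed.

Lemma RInt_indicator_negative_time (J : R -> Prop) t T (u : R -> R) (w : R -> C) :
  (forall x, J x -> 0 <= x <= T) -> t < 0 ->
  RInt (V := CV) (fun s => Cmult (RtoC (indicator J s * u s)) (w s)) 0 t = RtoC 0.
Proof.
  intros HJ Ht. apply (is_RInt_unique (V := CV)).
  eapply is_RInt_ext; [|apply is_RInt_C0]. intros x Hx. rewrite Rmin_right, Rmax_left in Hx by lra.
  rewrite indicator_iverson, iverson_false by (intros Jx; specialize (HJ x Jx); lra).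
  apply injective_projections; simpl; ring.
Qed.

(** * Estimates for a single mode *)

Lemma jbr_parallelogram_le a n :
  Rabs (jbr (Z3add a n) + jbr (Z3add a (Z3opp n)) - 2 * jbr n) <= Z3norm a ^ 2 / jbr n.
Proof.
  destruct a as [[a1 a2] a3], n as [[n1 n2] n3]. simpl Z3opp. simpl Z3add.
  rewrite !jbr_coord, Z3norm_sq, !plus_IZR, !opp_IZR.
  pose proof (sqrt_parallelogram_le (IZR a1) (IZR a2) (IZR a3) (IZR n1) (IZR n2) (IZR n3)) as H.
  simpl in H. replace (1 + (IZR a1 + - IZR n1) ^ 2 + (IZR a2 + - IZR n2) ^ 2 + (IZR a3 + - IZR n3) ^ 2)
    with (1 + (IZR a1 - IZR n1) ^ 2 + (IZR a2 - IZR n2) ^ 2 + (IZR a3 - IZR n3) ^ 2) by ring.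
  exact H.
Qed.

Section Mode.
Variables (f : R -> R -> Z3 -> C) (a : Z3) (J : R -> Prop) (T A lam t al be : R).
Hypothesis HT : 1 <= T.
Hypothesis Ht : 0 <= t <= T.
Hypothesis Hab : 0 <= al <= be.
Hypothesis Hbt : be <= t.
Hypothesis Hf_bound : forall t t' n, Rabs t <= T -> Rabs t' <= T -> Cmod (f t t' n) <= A * / jbr n ^ 3.
Hypothesis Hf_odd : forall t t' n, Rabs t <= T -> Rabs t' <= T ->
  Cmod (Cminus (f t t' n) (f t t' (Z3opp n))) <= A * / jbr n ^ 4.
Hypothesis Hf_deriv : forall t t' n, Rabs t <= T -> Rabs t' <= T ->
  exists d : C, is_derive (K := R_AbsRing) (V := C_R_NormedModule) (fun s => f t s n) t' d
    /\ Cmod d <= A * / jbr n ^ 4.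

Definition high_integral (c mu : R) (n : Z3) : C :=
  RInt (V := CV) (fun s => Cmult (cexpi (c + mu * s)) (f t s n)) al be.

Definition low_integrand (n : Z3) (s : R) : C :=
  Cmult (RtoC (sin ((t - s) * (jbr (Z3add a n) - jbr n)))) (Cmult (cexpi (lam * s)) (f t s n)).

Definition low_integral (n : Z3) : C := RInt (V := CV) (low_integrand n) al be.

Lemma Rabs_t_le : Rabs t <= T.
Proof. rewrite Rabs_right; lra. Qed.

Lemma Rabs_le_of_window s : al <= s <= be -> Rabs s <= T.
Proof. intros Hs. rewrite Rabs_right; lra. Qed.

Lemma Rminmax_window s : Rmin al be <= s <= Rmax al be -> al <= s <= be.
Proof. now rewrite Rmin_left, Rmax_right by lra. Qed.

Lemma ccontinuous_f n s : al <= s <= be -> ccontinuous (fun s => f t s n) s.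
Proof.
  intros Hs. destruct (Hf_deriv t s n Rabs_t_le (Rabs_le_of_window s Hs)) as [d [Hd _]].
  eapply ccontinuous_is_derive; eauto.
Qed.

Lemma ex_RInt_wave_f (g : R -> R) n : (forall s, continuous g s) ->
  ex_RInt (V := C_R_NormedModule) (fun s => Cmult (cexpi (g s)) (f t s n)) al be.
Proof.
  intros Hg. apply ex_RInt_ccontinuous. intros s Hs.
  apply ccontinuous_mult; [apply ccontinuous_cexpi, Hg | apply ccontinuous_f, Rminmax_window, Hs].
Qed.

Lemma ccontinuous_phase_f n s : al <= s <= be ->
  ccontinuous (fun s => Cmult (cexpi (lam * s)) (f t s n)) s.
Proof.
  intros Hs. apply ccontinuous_mult; [|apply ccontinuous_f, Hs].
  apply ccontinuous_cexpi, (continuous_Rmult (fun _ => lam)); [apply continuous_const | apply continuous_id].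
Qed.

Lemma ccontinuous_low_integrand n s : al <= s <= be -> ccontinuous (low_integrand n) s.
Proof.
  intros Hs. apply ccontinuous_mult.
  - apply ccontinuous_RtoC, continuous_sin_comp, (continuous_Rmult (fun s => t - s)), continuous_const.
    apply continuous_Rminus; [apply continuous_const | apply continuous_id].
  - apply ccontinuous_phase_f, Hs.
Qed.

Lemma ex_RInt_low_integrand n : ex_RInt (V := C_R_NormedModule) (low_integrand n) al be.
Proof. apply ex_RInt_ccontinuous. intros s Hs. apply ccontinuous_low_integrand, Rminmax_window, Hs. Qed.

Hypothesis HJ : forall s, 0 < s < t -> (al < s < be -> J s) /\ (J s -> al <= s <= be).

(* [sin p cos q = (sin (p + q) + sin (p - q)) / 2]: the sum frequency [<a + n> + <n>] gives
   the two high-frequency integrals, the difference frequency the low-frequency one. *)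
Lemma RInt_integrand_decomp n : RInt (V := CV) (integrand f a J lam t n) 0 t =
  Cplus (Cplus (Cmult (RtoC (1 / 4)) (high_integral (PI / 2 - t * omega a n) (lam + omega a n) n))
               (Cmult (RtoC (1 / 4)) (high_integral (t * omega a n - PI / 2) (lam - omega a n) n)))
        (Cmult (RtoC (1 / 2)) (low_integral n)).
Proof.
  set (u := fun s => sin ((t - s) * jbr (Z3add a n)) * cos ((t - s) * jbr n)).
  set (w := fun s => Cmult (cexpi (lam * s)) (f t s n)).
  rewrite (RInt_ext (V := CV) _ (fun s => Cmult (RtoC (indicator J s * u s)) (w s)))
    by (intros; unfold integrand, u, w; f_equal; f_equal; ring).
  rewrite (RInt_indicator_interval J t al be u w); auto.
  2: { apply ex_RInt_ccontinuous. intros s Hs. apply Rminmax_window in Hs.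
       apply ccontinuous_mult; [apply ccontinuous_RtoC | apply ccontinuous_phase_f, Hs].
       apply continuous_Rmult; [apply continuous_sin_comp | apply continuous_cos_comp];
         apply (continuous_Rmult (fun s => t - s)); try apply continuous_const;
         apply continuous_Rminus; (apply continuous_const || apply continuous_id). }
  set (c1 := PI / 2 - t * omega a n). set (m1 := lam + omega a n).
  set (c2 := t * omega a n - PI / 2). set (m2 := lam - omega a n).
  assert (E1 := ex_RInt_wave_f (fun s => c1 + m1 * s) n (continuous_affine c1 m1)).
  assert (E2 := ex_RInt_wave_f (fun s => c2 + m2 * s) n (continuous_affine c2 m2)).
  assert (E3 := ex_RInt_low_integrand n).
  apply (is_RInt_unique (V := CV)).
  pose proof (is_RInt_plus _ _ _ _ _ _
    (is_RInt_plus _ _ _ _ _ _ (is_RInt_scal _ _ _ (1 / 4) _ (RInt_correct (V := CV) _ _ _ E1))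
                              (is_RInt_scal _ _ _ (1 / 4) _ (RInt_correct (V := CV) _ _ _ E2)))
    (is_RInt_scal _ _ _ (1 / 2) _ (RInt_correct (V := CV) _ _ _ E3))) as H.
  rewrite !scal_R_Cmult in H. change plus with Cplus in H.
  eapply is_RInt_ext; [|exact H]. intros s _. cbv beta. rewrite !scal_R_Cmult. change plus with Cplus.
  unfold u, w, low_integrand, c1, m1, c2, m2, omega.
  symmetry. rewrite Cmult_assoc, sin_cos_cexpi_decomp.
  replace (PI / 2 - t * (jbr (Z3add a n) + jbr n) + (lam + (jbr (Z3add a n) + jbr n)) * s)
    with (lam * s - ((t - s) * jbr (Z3add a n) + (t - s) * jbr n) + PI / 2) by ring.
  replace (t * (jbr (Z3add a n) + jbr n) - PI / 2 + (lam - (jbr (Z3add a n) + jbr n)) * s)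
    with (lam * s + ((t - s) * jbr (Z3add a n) + (t - s) * jbr n) - PI / 2) by ring.
  replace ((t - s) * (jbr (Z3add a n) - jbr n)) with ((t - s) * jbr (Z3add a n) - (t - s) * jbr n) by ring.
  apply injective_projections; simpl; ring.
Qed.

Lemma Cmod_high_integral_le c mu n :
  Cmod (high_integral c mu n) <= 2 * PI * T * (A * / jbr n ^ 3 + A * / jbr n ^ 4) * mininv mu.
Proof.
  apply Cmod_oscillatory_integral_le_mininv; try lra.
  - intros s Hs. apply Hf_deriv; [apply Rabs_t_le | apply Rabs_le_of_window, Hs].
  - intros s Hs. apply Hf_bound; [apply Rabs_t_le | apply Rabs_le_of_window, Hs].
Qed.

(* Pairing [n] with [-n]: the odd part of [f] is one order smaller, and the two low
   frequencies [<a + n> - <n>] and [<a - n> - <n>] nearly cancel. *)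
Lemma Cmod_low_integrand_pair_le n s : al <= s <= be ->
  Cmod (Cplus (low_integrand n s) (low_integrand (Z3opp n) s))
  <= A * / jbr n ^ 4 + T * (Z3norm a ^ 2 / jbr n) * (A * / jbr n ^ 3).
Proof.
  intros Hs. pose proof (Rabs_le_of_window s Hs) as HsT.
  unfold low_integrand. rewrite jbr_opp.
  set (d1 := jbr (Z3add a n) - jbr n). set (d2 := jbr (Z3add a (Z3opp n)) - jbr n).
  set (F1 := f t s n). set (F2 := f t s (Z3opp n)).
  replace (Cplus (Cmult (RtoC (sin ((t - s) * d1))) (Cmult (cexpi (lam * s)) F1))
                 (Cmult (RtoC (sin ((t - s) * d2))) (Cmult (cexpi (lam * s)) F2)))
    with (Cmult (cexpi (lam * s)) (Cplus (Cmult (RtoC (sin ((t - s) * d1))) (Cminus F1 F2))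
                                         (Cmult (RtoC (sin ((t - s) * d1) + sin ((t - s) * d2))) F2)))
    by (apply injective_projections; simpl; ring).
  rewrite Cmod_mult, Cmod_cexpi, Rmult_1_l. eapply Rle_trans; [apply Cmod_triangle|].
  rewrite !Cmod_mult, !Cmod_R.
  assert (S1 : Rabs (sin ((t - s) * d1)) <= 1) by apply Rabs_le_1_of_bounds, SIN_bound.
  assert (S2 : Rabs (sin ((t - s) * d1) + sin ((t - s) * d2)) <= T * (Z3norm a ^ 2 / jbr n)).
  { eapply Rle_trans; [apply Rabs_sin_add_sin_le|].
    replace ((t - s) * d1 + (t - s) * d2)
      with ((t - s) * (jbr (Z3add a n) + jbr (Z3add a (Z3opp n)) - 2 * jbr n)) by (unfold d1, d2; ring).
    rewrite Rabs_mult. apply Rmult_le_compat; try apply Rabs_pos.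
    - rewrite Rabs_right; lra.
    - apply jbr_parallelogram_le. }
  assert (C1 : Cmod (Cminus F1 F2) <= A * / jbr n ^ 4) by (apply Hf_odd; [apply Rabs_t_le | auto]).
  assert (C2 : Cmod F2 <= A * / jbr n ^ 3)
    by (unfold F2; rewrite <- (jbr_opp n); apply Hf_bound; [apply Rabs_t_le | auto]).
  pose proof (Cmod_ge_0 (Cminus F1 F2)). pose proof (Cmod_ge_0 F2).
  pose proof (Rabs_pos (sin ((t - s) * d1))). pose proof (Rabs_pos (sin ((t - s) * d1) + sin ((t - s) * d2))).
  apply Rplus_le_compat; [nra|]. apply Rmult_le_compat; auto.
Qed.

Lemma Cmod_low_integral_pair_le n : Cmod (Cplus (low_integral n) (low_integral (Z3opp n)))
   <= T * (A * / jbr n ^ 4 + T * (Z3norm a ^ 2 / jbr n) * (A * / jbr n ^ 3)).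
Proof.
  unfold low_integral. rewrite <- (RInt_plus (V := CV)) by apply ex_RInt_low_integrand.
  assert (HB0 := Cmod_low_integrand_pair_le n al ltac:(lra)).
  pose proof (Cmod_ge_0 (Cplus (low_integrand n al) (low_integrand (Z3opp n) al))).
  eapply Rle_trans.
  - apply Cmod_RInt_le; intros s Hs; apply Rminmax_window in Hs;
      [apply Cmod_low_integrand_pair_le, Hs | apply ccontinuous_plus; apply ccontinuous_low_integrand, Hs].
  - rewrite Rabs_right by lra. apply Rmult_le_compat_r; lra.
Qed.
End Mode.

(** * Summation over the shell *)

Section LittlewoodPaley.
Variables (rho0 : R -> R) (N : R).
Hypothesis Hrho : truncation_profile rho0.
Hypothesis HN : 1 < N.

Lemma chiN_eq n : chiN rho0 N n = rho0 (Z3norm n / N) - rho0 (Z3norm n / (N / 2)).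
Proof. unfold chiN. destruct Req_EM_T; [lra | reflexivity]. Qed.

Lemma chiN_opp n : chiN rho0 N (Z3opp n) = chiN rho0 N n.
Proof. now rewrite !chiN_eq, Z3norm_opp. Qed.

Lemma chiN_out_of_shell n : ~ shell N n -> chiN rho0 N n = 0.
Proof.
  intros Hs. rewrite chiN_eq. destruct Hrho as [_ [_ [H1 H2]]]. pose proof (Z3norm_nonneg n).
  assert (E : Z3norm n / (N / 2) = 2 * (Z3norm n / N)) by (field; lra).
  assert (0 <= Z3norm n / N) by (apply Rdiv_le_0_compat; lra).
  rewrite E. destruct (Rle_dec (Z3norm n) (N / 2)).
  - assert (Z3norm n / N <= 1 / 2) by (apply Rmult_le_reg_r with N; [lra | field_simplify; lra]).
    rewrite !H1 by (rewrite Rabs_right; lra). ring.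
  - assert (2 <= Z3norm n / N)
      by (apply Rmult_le_reg_r with N; [lra | field_simplify; unfold shell in Hs; lra]).
    rewrite !H2 by (rewrite Rabs_right; lra). ring.
Qed.

Lemma Rabs_chiN_le_shell n : Rabs (chiN rho0 N n) <= iverson (shell N n).
Proof.
  destruct (classic (shell N n)) as [Hs|Hs].
  - rewrite iverson_true, chiN_eq by exact Hs. destruct Hrho as [_ [H01 _]].
    pose proof (H01 (Z3norm n / N)). pose proof (H01 (Z3norm n / (N / 2))).
    unfold Rabs; destruct Rcase_abs; lra.
  - rewrite iverson_false, chiN_out_of_shell, Rabs_R0 by exact Hs. lra.
Qed.

Lemma Rabs_chiN_mul_le n X B : 0 <= X -> (shell N n -> X <= B) ->
  Rabs (chiN rho0 N n) * X <= iverson (shell N n) * B.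
Proof.
  intros HX HXB. pose proof (Rabs_chiN_le_shell n). pose proof (Rabs_pos (chiN rho0 N n)).
  destruct (classic (shell N n)) as [Hs|Hs].
  - rewrite iverson_true in * by exact Hs. specialize (HXB Hs). nra.
  - rewrite iverson_false in * by exact Hs. nra.
Qed.

End LittlewoodPaley.

Lemma inv_jbr_pow_le_shell N n k : 0 < N -> shell N n -> / jbr n ^ k <= (2 / N) ^ k.
Proof.
  intros HN [Hs _]. pose proof (jbr_ge_norm n).
  replace (2 / N) with (/ (N / 2)) by (field; lra). rewrite <- pow_inv.
  apply pow_incr. split; [left; apply Rinv_0_lt_compat; lra|].
  apply Rinv_le_contravar; lra.
Qed.

Lemma ln_2_plus_ge_1 N : 1 <= N -> 1 <= ln (2 + N).
Proof.
  intros HN. rewrite <- ln_exp at 1. apply ln_le; [apply exp_pos|].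
  pose proof exp_le_3. lra.
Qed.

Lemma two_plus_ln_le N : 1 <= N -> 2 + ln (4 * N + 1) <= 4 * ln (2 + N).
Proof.
  intros HN. pose proof (ln_2_plus_ge_1 N HN).
  assert (Hsq : ln (4 * N + 1) <= ln ((2 + N) ^ 2)) by (apply ln_le; [lra | nra]).
  rewrite ln_pow in Hsq by lra. simpl INR in Hsq. lra.
Qed.

Lemma jbr_weights_le_shell N n A : 1 <= N -> 0 <= A -> shell N n ->
  A * / jbr n ^ 3 + A * / jbr n ^ 4 <= 24 * A / N ^ 3.
Proof.
  intros HN HA Hs.
  pose proof (inv_jbr_pow_le_shell N n 3 ltac:(lra) Hs).
  pose proof (inv_jbr_pow_le_shell N n 4 ltac:(lra) Hs).
  assert ((2 / N) ^ 3 = 8 / N ^ 3) by (field; lra).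
  assert ((2 / N) ^ 4 <= 16 / N ^ 3).
  { replace ((2 / N) ^ 4) with (16 / N ^ 3 * / N) by (field; lra).
    assert (0 <= 16 / N ^ 3) by (apply Rdiv_le_0_compat; [lra | apply pow_lt; lra]).
    assert (/ N <= 1) by (rewrite <- Rinv_1; apply Rinv_le_contravar; lra). nra. }
  replace (24 * A / N ^ 3) with (A * (8 / N ^ 3) + A * (16 / N ^ 3)) by (field; lra). nra.
Qed.

Lemma main_term_budget_le (T A N Lg C0 q : R) : 1 <= T -> 1 <= A -> 0 < N -> 1 <= Lg ->
  0 <= q <= C0 ^ 2 * A ^ 2 ->
  921600 * (T * A * Lg / N) + 500 * (T * A * (1 + T * q) / N)
  <= 1000000 * (1 + C0 ^ 2) * (T ^ 2 * A ^ 3 * Lg / N).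
Proof.
  intros HT HA HN HLg Hq.
  set (P := T ^ 2 * A ^ 3 * Lg).
  assert (HA2 : 1 <= A ^ 2) by (rewrite <- (pow1 2); apply pow_incr; lra).
  assert (HTA2 : 1 <= T * A ^ 2) by (rewrite <- (Rmult_1_l 1); apply Rmult_le_compat; lra).
  assert (HTA : 1 <= T * A) by (rewrite <- (Rmult_1_l 1); apply Rmult_le_compat; lra).
  assert (HX : T * A * Lg <= P).
  { unfold P. replace (T ^ 2 * A ^ 3 * Lg) with (T * A * Lg * (T * A ^ 2)) by ring.
    rewrite <- (Rmult_1_r (T * A * Lg)) at 1. apply Rmult_le_compat_l; [nra | exact HTA2]. }
  assert (HY : T * A <= T * A * Lg)
    by (rewrite <- (Rmult_1_r (T * A)) at 1; apply Rmult_le_compat_l; lra).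
  assert (HZ : T * A * (T * q) <= C0 ^ 2 * P).
  { apply Rle_trans with (C0 ^ 2 * (T ^ 2 * A ^ 3)).
    - replace (C0 ^ 2 * (T ^ 2 * A ^ 3)) with (T * A * T * (C0 ^ 2 * A ^ 2)) by ring.
      replace (T * A * (T * q)) with (T * A * T * q) by ring.
      apply Rmult_le_compat_l; [nra | apply Hq].
    - unfold P. assert (0 <= C0 ^ 2 * (T ^ 2 * A ^ 3)) by (apply Rmult_le_pos; [apply pow2_ge_0 | nra]).
      nra. }
  assert (HC0P : 0 <= C0 ^ 2 * P) by (pose proof (pow2_ge_0 C0); nra).
  replace (921600 * (T * A * Lg / N) + 500 * (T * A * (1 + T * q) / N))
    with ((921600 * (T * A * Lg) + 500 * (T * A + T * A * (T * q))) / N) by (field; lra).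
  replace (1000000 * (1 + C0 ^ 2) * (P / N)) with ((1000000 * P + 1000000 * (C0 ^ 2 * P)) / N)
    by (field; lra).
  unfold Rdiv. apply Rmult_le_compat_r; [left; apply Rinv_0_lt_compat; lra | lra].
Qed.

Section Summation.
Variables (rho0 : R -> R) (f : R -> R -> Z3 -> C) (a : Z3) (J : R -> Prop).
Variables (T A N lam t al be : R) (M K : nat).
Hypothesis Hrho : truncation_profile rho0.
Hypothesis HT : 1 <= T.
Hypothesis HA : 1 <= A.
Hypothesis HN : 1 < N.
Hypothesis HM : INR M = 2 * N.
Hypothesis HMK : (M <= K)%nat.
Hypothesis Ha : Z3norm a <= N / 4.
Hypothesis Ht : 0 <= t <= T.
Hypothesis Hab : 0 <= al <= be.
Hypothesis Hbt : be <= t.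
Hypothesis HJ : forall s, 0 < s < t -> (al < s < be -> J s) /\ (J s -> al <= s <= be).
Hypothesis Hf_bound : forall t t' n, Rabs t <= T -> Rabs t' <= T -> Cmod (f t t' n) <= A * / jbr n ^ 3.
Hypothesis Hf_odd : forall t t' n, Rabs t <= T -> Rabs t' <= T ->
  Cmod (Cminus (f t t' n) (f t t' (Z3opp n))) <= A * / jbr n ^ 4.
Hypothesis Hf_deriv : forall t t' n, Rabs t <= T -> Rabs t' <= T ->
  exists d : C, is_derive (K := R_AbsRing) (V := C_R_NormedModule) (fun s => f t s n) t' d
    /\ Cmod d <= A * / jbr n ^ 4.

Let chi := chiN rho0 N.
Let high_sum (c mu : Z3 -> R) : C :=
  sum_box K (fun n => Cmult (RtoC (chi n)) (high_integral f t al be (c n) (mu n) n)).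
Let low_sum : C := sum_box K (fun n => Cmult (RtoC (chi n)) (low_integral f a lam t al be n)).

Lemma main_term_decomp : main_term rho0 N K f a J lam t =
  Cplus (Cplus (Cmult (RtoC (1 / 4)) (high_sum (fun n => PI / 2 - t * omega a n) (fun n => lam + omega a n)))
               (Cmult (RtoC (1 / 4)) (high_sum (fun n => t * omega a n - PI / 2) (fun n => lam - omega a n))))
        (Cmult (RtoC (1 / 2)) low_sum).
Proof.
  unfold main_term, high_sum, low_sum. rewrite <- !sum_box_scal, <- !sum_box_plus.
  apply sum_box_ext. intros n. rewrite (RInt_integrand_decomp f a J T A lam t al be); auto.
  fold (chi n). apply injective_projections; simpl; ring.
Qed.

Lemma Cmod_high_sum_le (c mu : Z3 -> R) (lam' : R) :
  (forall n, mininv (mu n) = mininv (lam' - omega a n)) ->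
  Cmod (high_sum c mu) <= 2 * PI * T * (24 * A / N ^ 3)
    * (3 * (INR (2 * M + 1) * (INR (2 * M + 1) * (32 * (2 + ln (INR (2 * M + 1))))))).
Proof.
  intros Hmu. unfold high_sum. eapply Rle_trans; [apply Cmod_sum_box|].
  assert (HW : 0 <= 2 * PI * T * (24 * A / N ^ 3)).
  { pose proof PI_RGT_0. apply Rmult_le_pos; [nra|]. apply Rdiv_le_0_compat; [lra | apply pow_lt; lra]. }
  apply Rle_trans with (2 * PI * T * (24 * A / N ^ 3)
                        * lsum3 K (fun n => iverson (shell N n) * mininv (lam' - omega a n))).
  2: { apply Rmult_le_compat_l; [exact HW | apply shell_mininv_lsum3_le; auto; lra]. }
  rewrite <- lsum3_scal. apply lsum3_le. intros n.
  rewrite Cmod_mult, Cmod_R, <- Rmult_assoc, (Rmult_comm _ (iverson _)), Rmult_assoc, <- Hmu.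
  apply Rabs_chiN_mul_le; auto; [apply Cmod_ge_0|]. intros Hs.
  eapply Rle_trans; [apply (Cmod_high_integral_le f T A t al be HT Ht Hab Hbt Hf_bound Hf_deriv)|].
  pose proof (jbr_weights_le_shell N n A ltac:(lra) ltac:(lra) Hs). pose proof PI_RGT_0.
  apply Rmult_le_compat_r; [apply mininv_nonneg|]. apply Rmult_le_compat_l; [nra | assumption].
Qed.

Lemma Cmod_low_integral_pair_le_shell n : shell N n ->
  Cmod (Cplus (low_integral f a lam t al be n) (low_integral f a lam t al be (Z3opp n)))
  <= 16 * T * A * (1 + T * Z3norm a ^ 2) / N ^ 4.
Proof.
  intros Hs. eapply Rle_trans; [apply (Cmod_low_integral_pair_le f a T A lam t al be); auto|].
  pose proof (inv_jbr_pow_le_shell N n 1 ltac:(lra) Hs) as H1.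
  pose proof (inv_jbr_pow_le_shell N n 3 ltac:(lra) Hs) as H3.
  pose proof (inv_jbr_pow_le_shell N n 4 ltac:(lra) Hs) as H4.
  rewrite !pow_1 in H1. pose proof (pow2_ge_0 (Z3norm a)).
  assert (0 <= / jbr n ^ 3) by (apply Rlt_le, Rinv_0_lt_compat, pow_lt; pose proof (jbr_ge_1 n); lra).
  assert (0 <= / jbr n) by (apply Rlt_le, Rinv_0_lt_compat; pose proof (jbr_ge_1 n); lra).
  apply Rle_trans with (T * (A * (2 / N) ^ 4 + T * (Z3norm a ^ 2 * (2 / N)) * (A * (2 / N) ^ 3))).
  - unfold Rdiv at 1. apply Rmult_le_compat_l; [lra|]. apply Rplus_le_compat.
    + apply Rmult_le_compat_l; lra.
    + apply Rmult_le_compat.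
      * apply Rmult_le_pos; [lra|]. apply Rmult_le_pos; lra.
      * apply Rmult_le_pos; lra.
      * apply Rmult_le_compat_l; [lra|]. unfold Rdiv at 1. apply Rmult_le_compat_l; lra.
      * apply Rmult_le_compat_l; lra.
  - right. field. lra.
Qed.

Lemma Cmod_low_sum_le_shell_count :
  2 * Cmod low_sum <= 16 * T * A * (1 + T * Z3norm a ^ 2) / N ^ 4 * lsum3 K (fun n => iverson (shell N n)).
Proof.
  set (V := 16 * T * A * (1 + T * Z3norm a ^ 2) / N ^ 4).
  assert (Hpair : Cmult (RtoC 2) low_sum = sum_box K (fun n => Cmult (RtoC (chi n))
       (Cplus (low_integral f a lam t al be n) (low_integral f a lam t al be (Z3opp n))))).
  { set (g := fun n => Cmult (RtoC (chi n)) (low_integral f a lam t al be n)).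
    rewrite (sum_box_ext K _ (fun n => Cplus (g n) (g (Z3opp n)))).
    - rewrite sum_box_plus, <- (sum_box_opp K g). unfold low_sum. fold g.
      generalize (sum_box K g). intros z. apply injective_projections; simpl; ring.
    - intros n. unfold g, chi. rewrite (chiN_opp rho0 N HN). apply injective_projections; simpl; ring. }
  replace (2 * Cmod low_sum) with (Cmod (Cmult (RtoC 2) low_sum))
    by (rewrite Cmod_mult, Cmod_R, Rabs_right; lra).
  rewrite Hpair, <- lsum3_scal. eapply Rle_trans; [apply Cmod_sum_box | apply lsum3_le]. intros n.
  rewrite Cmod_mult, Cmod_R, (Rmult_comm V).
  apply Rabs_chiN_mul_le; auto; [apply Cmod_ge_0 | apply Cmod_low_integral_pair_le_shell].
Qed.

Lemma INR_2M_1 : INR (2 * M + 1) = 4 * N + 1.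
Proof. rewrite plus_INR, mult_INR, HM. simpl. ring. Qed.

Lemma Cmod_high_sum_le_log (c mu : Z3 -> R) (lam' : R) :
  (forall n, mininv (mu n) = mininv (lam' - omega a n)) ->
  Cmod (high_sum c mu) <= 1843200 * (T * A * ln (2 + N) / N).
Proof.
  intros Hmu. eapply Rle_trans; [apply (Cmod_high_sum_le c mu lam' Hmu)|].
  set (R2 := INR (2 * M + 1)).
  assert (HR2 : 0 <= R2 <= 5 * N) by (unfold R2; rewrite INR_2M_1; lra).
  assert (Hlog : 2 + ln R2 <= 4 * ln (2 + N)) by (unfold R2; rewrite INR_2M_1; apply two_plus_ln_le; lra).
  assert (0 <= ln R2) by (unfold R2; rewrite <- ln_1; apply ln_le; [lra|]; apply (le_INR 1); lia).
  assert (HW : 2 * PI * T * (24 * A / N ^ 3) * (R2 * R2) <= 4800 * (T * A / N)).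
  { pose proof PI_RGT_0. pose proof PI_4.
    assert (R2 * R2 <= 25 * N ^ 2) by nra.
    assert (0 <= 2 * PI * T * (24 * A / N ^ 3))
      by (apply Rmult_le_pos; [nra | apply Rdiv_le_0_compat; [lra | apply pow_lt; lra]]).
    apply Rle_trans with (2 * PI * T * (24 * A / N ^ 3) * (25 * N ^ 2)); [nra|].
    replace (2 * PI * T * (24 * A / N ^ 3) * (25 * N ^ 2)) with (1200 * PI * (T * A / N)) by (field; lra).
    assert (0 <= T * A / N) by (apply Rdiv_le_0_compat; nra). nra. }
  replace (2 * PI * T * (24 * A / N ^ 3) * (3 * (R2 * (R2 * (32 * (2 + ln R2))))))
    with ((2 * PI * T * (24 * A / N ^ 3) * (R2 * R2)) * (96 * (2 + ln R2))) by ring.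
  replace (1843200 * (T * A * ln (2 + N) / N)) with ((4800 * (T * A / N)) * (96 * (4 * ln (2 + N))))
    by (field; lra).
  apply Rmult_le_compat; try lra.
  apply Rmult_le_pos; [|nra]. apply Rmult_le_pos; [pose proof PI_RGT_0; nra |].
  apply Rdiv_le_0_compat; [lra | apply pow_lt; lra].
Qed.

Lemma Cmod_low_sum_le : Cmod low_sum <= 1000 * (T * A * (1 + T * Z3norm a ^ 2) / N).
Proof.
  pose proof Cmod_low_sum_le_shell_count as H2.
  pose proof (shell_lsum3_le N M K ltac:(lra) HM HMK) as Hcount.
  set (R2 := INR (2 * M + 1)) in Hcount.
  assert (HR2 : 0 <= R2 <= 5 * N) by (unfold R2; rewrite INR_2M_1; lra).
  assert (HR3 : R2 * (R2 * R2) <= 125 * N ^ 3).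
  { assert (R2 * R2 <= 25 * N ^ 2) by nra. assert (0 <= R2 * R2) by nra. nra. }
  assert (HV : 0 <= 16 * T * A * (1 + T * Z3norm a ^ 2) / N ^ 4).
  { pose proof (pow2_ge_0 (Z3norm a)). apply Rdiv_le_0_compat; [|apply pow_lt; lra].
    apply Rmult_le_pos; nra. }
  assert (Hlow : 2 * Cmod low_sum <= 16 * T * A * (1 + T * Z3norm a ^ 2) / N ^ 4 * (125 * N ^ 3)).
  { eapply Rle_trans; [exact H2|]. apply Rmult_le_compat_l; [exact HV | lra]. }
  replace (16 * T * A * (1 + T * Z3norm a ^ 2) / N ^ 4 * (125 * N ^ 3))
    with (2 * (1000 * (T * A * (1 + T * Z3norm a ^ 2) / N))) in Hlow by (field; lra).
  lra.
Qed.

Variable C0 : R.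
Hypothesis Ha_A : Z3norm a <= C0 * A.

Lemma Cmod_main_term_le :
  Cmod (main_term rho0 N K f a J lam t) <= 1000000 * (1 + C0 ^ 2) * (T ^ 2 * A ^ 3 * ln (2 + N) / N).
Proof.
  rewrite main_term_decomp.
  pose proof (Cmod_high_sum_le_log (fun n => PI / 2 - t * omega a n) (fun n => lam + omega a n) (- lam)
    ltac:(intros; rewrite <- mininv_opp; f_equal; ring)) as H1.
  pose proof (Cmod_high_sum_le_log (fun n => t * omega a n - PI / 2) (fun n => lam - omega a n) lam
    ltac:(intros; reflexivity)) as H2.
  pose proof Cmod_low_sum_le as H3.
  set (S1 := high_sum (fun n => PI / 2 - t * omega a n) (fun n => lam + omega a n)) in *.
  set (S2 := high_sum (fun n => t * omega a n - PI / 2) (fun n => lam - omega a n)) in *.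
  assert (Htri : Cmod (Cplus (Cplus (Cmult (RtoC (1 / 4)) S1) (Cmult (RtoC (1 / 4)) S2))
                             (Cmult (RtoC (1 / 2)) low_sum))
          <= 1 / 4 * Cmod S1 + 1 / 4 * Cmod S2 + 1 / 2 * Cmod low_sum).
  { eapply Rle_trans; [apply Cmod_triangle|]. eapply Rle_trans; [apply Rplus_le_compat_r, Cmod_triangle|].
    rewrite !Cmod_mult, !Cmod_R, !Rabs_right by lra. lra. }
  eapply Rle_trans; [exact Htri|].
  eapply Rle_trans; [|apply (main_term_budget_le T A N (ln (2 + N)) C0 (Z3norm a ^ 2)); try lra].
  - lra.
  - apply ln_2_plus_ge_1. lra.
  - split; [apply pow2_ge_0|].
    rewrite <- Rpow_mult_distr. pose proof (Z3norm_nonneg a). apply pow_incr. lra.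
Qed.
End Summation.

Lemma main_term_negative_time rho0 N K f a J T lam t :
  (forall x, J x -> 0 <= x <= T) -> t < 0 -> main_term rho0 N K f a J lam t = RtoC 0.
Proof.
  intros HJ Ht. unfold main_term.
  rewrite (sum_box_ext K _ (fun n => Cmult (RtoC 0) (RtoC 0))), sum_box_scal; [apply Cmult_0_l|].
  intros n.
  rewrite (RInt_ext (V := CV) _ (fun s => Cmult (RtoC (indicator J s * (sin ((t - s) * jbr (Z3add a n))
             * cos ((t - s) * jbr n)))) (Cmult (cexpi (lam * s)) (f t s n))))
    by (intros; unfold integrand; do 2 f_equal; ring).
  rewrite (RInt_indicator_negative_time J t T) by assumption.
  apply injective_projections; simpl; ring.
Qed.

Theorem lemma4p14 :
  forall rho0 : R -> R, truncation_profile rho0 ->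
  forall C0 : R, 0 < C0 ->
  exists C1 C2 : R, 0 < C1 /\ 0 < C2 /\
  forall (f : R -> R -> Z3 -> C) (a : Z3) (T : R) (J : R -> Prop) (A N : R),
    1 <= T ->
    is_interval J -> (forall x, J x -> 0 <= x <= T) ->
    1 <= A -> 1 <= N -> is_dyadic N ->
    Z3norm a <= C0 * A -> C1 * A <= N ->
    (forall t t' n, Rabs t <= T -> Rabs t' <= T ->
       Cmod (f t t' n) <= A * / jbr n ^ 3) ->
    (forall t t' n, Rabs t <= T -> Rabs t' <= T ->
       Cmod (Cminus (f t t' n) (f t t' (Z3opp n))) <= A * / jbr n ^ 4) ->
    (forall t t' n, Rabs t <= T -> Rabs t' <= T ->
       exists d : C,
         is_derive (K := R_AbsRing) (V := C_R_NormedModule) (fun s => f t s n) t' d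
         /\ Cmod d <= A * / jbr n ^ 4) ->
    forall (K : nat), 2 * N <= INR K ->
    forall lam t : R, Rabs t <= T ->
      Cmod (main_term rho0 N K f a J lam t)
        <= C2 * (T ^ 2 * A ^ 3 * ln (2 + N) / N).
Proof.
  intros rho0 Hrho C0 HC0.
  (* [C1 = 4 C0 + 8] forces [N >= 8] and [|a| <= C0 A <= N / 4]. *)
  exists (4 * C0 + 8), (1000000 * (1 + C0 ^ 2)).
  split; [lra|]. split; [pose proof (pow2_ge_0 C0); lra|].
  intros f a T J A N HT HJi HJ HA HN [k Hk] Ha HC1 Hf_bound Hf_odd Hf_deriv K HK lam t Ht.
  destruct (Rlt_dec t 0) as [Hneg|Hnonneg].
  - rewrite (main_term_negative_time rho0 N K f a J T lam t HJ Hneg), Cmod_0.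
    pose proof (pow2_ge_0 C0). pose proof (ln_2_plus_ge_1 N HN).
    apply Rmult_le_pos; [lra|]. apply Rdiv_le_0_compat; [|lra].
    repeat apply Rmult_le_pos; try apply pow_le; lra.
  - assert (Ht0 : 0 <= t <= T) by (split; [lra|]; pose proof (Rle_abs t); lra).
    destruct (interval_trace_endpoints J t HJi ltac:(lra)) as [al [be [Hab [Hbt Hends]]]].
    assert (HM : INR (2 * 2 ^ k) = 2 * N)
      by (rewrite mult_INR, pow_INR, Hk; replace (INR 2) with 2 by (simpl; ring); reflexivity).
    apply (Cmod_main_term_le rho0 f a J T A N lam t al be (2 * 2 ^ k) K); auto; try nra.
    apply INR_le. lra.
Qed.
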